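(* Let $T$ be a real-analytic diffeomorphism of $\mathbb{T}^2$ homotopic to the identity such that the lifts of $T$ and $T^{-1}$ extend to entire maps of $\mathbb{C}^2$, and set $G(\alpha)=T^{-1}\circ R_\alpha\circ T$. Let $p,q$ be coprime integers with $q\ge1$, $p/q\in[0,1]$, let $c\ge0$ and $\Phi(x,y)=\left(x+\frac{1}{2q},\ y+c\sin(2\pi qx)\right)$, and $G'(\alpha)=(\Phi\circ T)^{-1}\circ R_\alpha\circ(\Phi\circ T)$. Then for every $r\ge0$, $\varepsilon>0$ and $\tau\in\mathbb{N}$ there exists an interval $I$ of positive length centered at $p/q$ such that for all $\alpha\in I$, $$\max_{i=0,\dots,\tau}\left|G(\alpha)^i-G'(\alpha)^i\right|_r<\varepsilon .$$
   Context: $R_\alpha(x,y)=(x+\alpha,y)$; $F^i$ denotes the $i$-th iterate. For $r\ge0$, $A^r=\{(x,y)\in\mathbb{C}^2:|\mathrm{Im}\,x|\le r,|\mathrm{Im}\,y|\le r\}$ and for maps $F,G$ of $\mathbb{C}^2$ whose difference is $\mathbb{Z}^2$-periodic, $|F-G|_r=\max_{i=1,2}\sup_{A^r}|F_i-G_i|$. *)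

From Stdlib Require Import Reals ZArith.
From Coquelicot Require Import Coquelicot.
Open Scope R_scope.

Definition C2 := (C * C)%type.
Definition R2 := (R * R)%type.

Definition Csin (z : C) : C :=
  (sin (Re z) * cosh (Im z), cos (Re z) * sinh (Im z)).

(* f : C^2 -> C is entire: jointly continuous and holomorphic in each
   variable separately at every point (Osgood's definition). *)
Definition entire_fun (f : C2 -> C) : Prop :=
  forall (z w : C),
    continuous (f : prod_UniformSpace C_UniformSpace C_UniformSpace -> C_UniformSpace) (z, w) /\
    @ex_derive C_AbsRing C_NormedModule (fun u : C => f (u, w)) z /\
    @ex_derive C_AbsRing C_NormedModule (fun u : C => f (z, u)) w.

Definition entire_map (F : C2 -> C2) : Prop :=
  entire_fun (fun p => fst (F p)) /\ entire_fun (fun p => snd (F p)).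

Definition extends (f : R2 -> R2) (F : C2 -> C2) : Prop :=
  forall x y : R, F (RtoC x, RtoC y) = (RtoC (fst (f (x, y))), RtoC (snd (f (x, y)))).

Definition lift_homotopic_id (f : R2 -> R2) : Prop :=
  forall (x y : R) (m n : Z),
    f (x + IZR m, y + IZR n) = (fst (f (x, y)) + IZR m, snd (f (x, y)) + IZR n).

Definition Rot (a : R) (p : C2) : C2 := (Cplus (fst p) (RtoC a), snd p).

Definition Phi (q : Z) (c : R) (p : C2) : C2 :=
  (Cplus (fst p) (RtoC (/ (2 * IZR q))),
   Cplus (snd p) (Cmult (RtoC c) (Csin (Cmult (RtoC (2 * PI * IZR q)) (fst p))))).

Definition Phi_inv (q : Z) (c : R) (p : C2) : C2 :=
  let x' := Cminus (fst p) (RtoC (/ (2 * IZR q))) in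
  (x', Cminus (snd p) (Cmult (RtoC c) (Csin (Cmult (RtoC (2 * PI * IZR q)) x')))).

Definition Gmap (Tc Tic : C2 -> C2) (a : R) (p : C2) : C2 := Tic (Rot a (Tc p)).
Definition Gmap' (Tc Tic : C2 -> C2) (q : Z) (c : R) (a : R) (p : C2) : C2 :=
  Tic (Phi_inv q c (Rot a (Phi q c (Tc p)))).

Definition in_strip (r : R) (p : C2) : Prop :=
  Rabs (Im (fst p)) <= r /\ Rabs (Im (snd p)) <= r.

(* At [alpha = p/q] the map [Phi] commutes with [R_{p/q}], since [q * p/q] is an integer
   and [x |-> sin (2 pi q x)] has period [1/q]; hence [G(p/q) = G'(p/q)].  The iterates of
   [G(alpha)] and [G'(alpha)] depend continuously on [(alpha, z)], so for [alpha] near [p/q]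
   the first [tau] of them are uniformly close on the compact box [[0,1]^2 x [-r,r]^2]
   (real and imaginary parts).  Both maps commute with the integer translations of [C^2],
   which carry the box onto the whole strip [A^r]: on [R^2] this is the fact that [T] and
   [T^-1] are lifts of maps homotopic to the identity, and it extends to [C^2] by the identity
   theorem: Goursat's theorem on rectangles gives Cauchy's formula, and Cauchy integrals
   show that an entire function vanishing on [R] vanishes everywhere. *)

From Stdlib Require Import Reals Lra Lia ZArith List IndefiniteDescription Classical
  FunctionalExtensionality.
From Coquelicot Require Import Coquelicot.
Import ListNotations.
Open Scope R_scope.

(** * Complex differentiability *)

Lemma Cmod_sub_sym (x y : C) : Cmod (x - y) = Cmod (y - x).
Proof. rewrite <- Cmod_opp. f_equal. ring. Qed.

Lemma Cmod_sub_le (x y : C) : Cmod (x - y) <= Cmod x + Cmod y.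
Proof. unfold Cminus. rewrite <- (Cmod_opp y). apply Cmod_triangle. Qed.

Lemma Cmod_sub_ge (x y : C) : Cmod x - Cmod y <= Cmod (x - y).
Proof. pose proof (Cmod_triangle (x - y) y). replace (x - y + y)%C with x in H by ring. lra. Qed.

Lemma Cmod_self_sub (x : C) : Cmod (x - x) = 0.
Proof. replace (x - x)%C with (RtoC 0) by ring. apply Cmod_0. Qed.

Lemma Rabs_Im_le_Cmod (x : C) : Rabs (snd x) <= Cmod x.
Proof. eapply Rle_trans; [apply Rmax_r|apply Rmax_Cmod]. Qed.

Lemma Cmod_le_Rabs_sum (x : C) : Cmod x <= Rabs (fst x) + Rabs (snd x).
Proof.
  destruct x as [u v]. pose proof (Cmod_triangle (RtoC u) (Ci * RtoC v)) as H.
  replace (RtoC u + Ci * RtoC v)%C with ((u, v) : C) in H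
    by (apply injective_projections; simpl; ring).
  rewrite Cmod_mult, Cmod_Ci, !Cmod_R, Rmult_1_l in H. exact H.
Qed.

Definition Ccontinuous (g : C -> C) (z : C) :=
  forall e, 0 < e -> exists d, 0 < d /\
    forall y, Cmod (y - z) < d -> Cmod (g y - g z) < e.

Definition is_Cderive (g : C -> C) (z l : C) :=
  forall e, 0 < e -> exists d, 0 < d /\
    forall y, Cmod (y - z) < d -> Cmod (g y - g z - l * (y - z)) <= e * Cmod (y - z).

Definition ex_Cderive (g : C -> C) (z : C) := exists l, is_Cderive g z l.

Lemma is_Cderive_continuous (g : C -> C) (z l : C) : is_Cderive g z l -> Ccontinuous g z.
Proof.
  intros H e He. destruct (H 1 Rlt_0_1) as [d [Hd Hy]].
  set (L := Cmod l + 2). assert (HL : 0 < L) by (pose proof (Cmod_ge_0 l); unfold L; lra).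
  exists (Rmin d (e / L)). split; [apply Rmin_glb_lt; auto; apply Rdiv_lt_0_compat; lra|].
  intros y Hyz.
  assert (H1 : Cmod (y - z) < d) by (eapply Rlt_le_trans; [apply Hyz|apply Rmin_l]).
  assert (H2 : Cmod (y - z) * L < e).
  { apply (Rmult_lt_compat_r L) in Hyz; [|lra]. eapply Rlt_le_trans; [apply Hyz|].
    replace e with (e / L * L) at 2 by (field; lra). apply Rmult_le_compat_r; [lra|apply Rmin_r]. }
  specialize (Hy y H1).
  replace (g y - g z)%C with ((g y - g z - l * (y - z)) + l * (y - z))%C by ring.
  eapply Rle_lt_trans; [apply Cmod_triangle|]. rewrite Cmod_mult.
  pose proof (Cmod_ge_0 l). pose proof (Cmod_ge_0 (y - z)). unfold L in H2. nra.
Qed.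

Lemma is_Cderive_const (c z : C) : is_Cderive (fun _ => c) z 0.
Proof.
  intros e He. exists 1. split; [lra|]. intros y _.
  replace (c - c - 0 * (y - z))%C with (RtoC 0) by ring. rewrite Cmod_0.
  pose proof (Cmod_ge_0 (y - z)). nra.
Qed.

Lemma is_Cderive_id (z : C) : is_Cderive (fun y => y) z 1.
Proof.
  intros e He. exists 1. split; [lra|]. intros y _.
  replace (y - z - 1 * (y - z))%C with (RtoC 0) by ring. rewrite Cmod_0.
  pose proof (Cmod_ge_0 (y - z)). nra.
Qed.

Lemma is_Cderive_plus (g h : C -> C) (z lg lh : C) : is_Cderive g z lg -> is_Cderive h z lh ->
  is_Cderive (fun y => g y + h y)%C z (lg + lh).
Proof.
  intros Hg Hh e He. destruct (Hg (e/2)) as [d1 [Hd1 H1]]; [lra|].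
  destruct (Hh (e/2)) as [d2 [Hd2 H2]]; [lra|].
  exists (Rmin d1 d2). split; [apply Rmin_glb_lt; auto|]. intros y Hy.
  specialize (H1 y (Rlt_le_trans _ _ _ Hy (Rmin_l _ _))).
  specialize (H2 y (Rlt_le_trans _ _ _ Hy (Rmin_r _ _))).
  replace (g y + h y - (g z + h z) - (lg + lh) * (y - z))%C with
    ((g y - g z - lg * (y - z)) + (h y - h z - lh * (y - z)))%C by ring.
  eapply Rle_trans; [apply Cmod_triangle|]. lra.
Qed.

Lemma is_Cderive_mult (g h : C -> C) (z lg lh : C) : is_Cderive g z lg -> is_Cderive h z lh ->
  is_Cderive (fun y => g y * h y)%C z (lg * h z + g z * lh).
Proof.
  intros Hg Hh e He.
  pose proof (is_Cderive_continuous h z lh Hh) as Hhc.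
  set (A := Cmod (h z) + 1). set (B := Cmod lg). set (G := Cmod (g z)).
  assert (HA : 0 < A) by (unfold A; pose proof (Cmod_ge_0 (h z)); lra).
  assert (HB : 0 <= B) by apply Cmod_ge_0. assert (HG : 0 <= G) by apply Cmod_ge_0.
  set (e' := e / (A + B + G + 1)).
  assert (He' : 0 < e') by (unfold e'; apply Rdiv_lt_0_compat; lra).
  assert (Hee : e' * (A + B + G + 1) = e) by (unfold e'; field; lra).
  destruct (Hg e' He') as [d1 [Hd1 H1]]. destruct (Hh e' He') as [d2 [Hd2 H2]].
  destruct (Hhc (Rmin 1 e')) as [d3 [Hd3 H3]]; [apply Rmin_glb_lt; lra|].
  exists (Rmin d1 (Rmin d2 d3)). split; [repeat apply Rmin_glb_lt; auto|]. intros y Hy.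
  pose proof (Rmin_l d1 (Rmin d2 d3)). pose proof (Rmin_r d1 (Rmin d2 d3)).
  pose proof (Rmin_l d2 d3). pose proof (Rmin_r d2 d3).
  specialize (H1 y ltac:(lra)). specialize (H2 y ltac:(lra)). specialize (H3 y ltac:(lra)).
  pose proof (Rmin_l 1 e'). pose proof (Rmin_r 1 e').
  replace (g y * h y - g z * h z - (lg * h z + g z * lh) * (y - z))%C with
    ((g y - g z - lg * (y - z)) * h y + lg * (y - z) * (h y - h z)
     + g z * (h y - h z - lh * (y - z)))%C by ring.
  eapply Rle_trans; [apply Cmod_triangle|].
  eapply Rle_trans; [apply Rplus_le_compat_r, Cmod_triangle|]. rewrite !Cmod_mult.
  assert (Hhy : Cmod (h y) <= A).
  { replace (h y) with ((h y - h z) + h z)%C by ring.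
    eapply Rle_trans; [apply Cmod_triangle|]. unfold A. lra. }
  fold B G. pose proof (Cmod_ge_0 (y - z)).
  pose proof (Cmod_ge_0 (h y - h z)). pose proof (Cmod_ge_0 (h y)).
  pose proof (Cmod_ge_0 (g y - g z - lg * (y - z))).
  set (m := Cmod (y - z)) in *.
  assert (T1 : Cmod (g y - g z - lg * (y - z)) * Cmod (h y) <= e' * m * A)
    by (apply Rmult_le_compat; auto).
  assert (T2 : B * m * Cmod (h y - h z) <= B * m * e')
    by (apply Rmult_le_compat_l; [apply Rmult_le_pos|]; lra).
  assert (T3 : G * Cmod (h y - h z - lh * (y - z)) <= G * (e' * m))
    by (apply Rmult_le_compat_l; auto).
  nra.
Qed.

Lemma is_Cderive_Cinv (z : C) : z <> 0%C -> is_Cderive Cinv z (- / (z * z)).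
Proof.
  intros Hz e He. assert (Hm : 0 < Cmod z) by (apply Cmod_gt_0; exact Hz).
  set (m := Cmod z) in *.
  assert (Hm3 : 0 < m / 2 * m * m) by (repeat apply Rmult_lt_0_compat; lra).
  exists (Rmin (m / 2) (e * (m / 2 * m * m))). split.
  { apply Rmin_glb_lt; [lra|]. apply Rmult_lt_0_compat; auto. }
  intros y Hy.
  assert (Hy1 : Cmod (y - z) < m / 2) by (eapply Rlt_le_trans; [apply Hy|apply Rmin_l]).
  assert (Hy2 : Cmod (y - z) < e * (m / 2 * m * m))
    by (eapply Rlt_le_trans; [apply Hy|apply Rmin_r]).
  assert (Hym : m / 2 <= Cmod y).
  { pose proof (Cmod_sub_ge z y). rewrite Cmod_sub_sym in H. fold m in H. lra. }
  assert (Hy0 : y <> 0%C) by (intro E; rewrite E, Cmod_0 in Hym; lra).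
  replace (/ y - / z - - / (z * z) * (y - z))%C with ((y - z) * (y - z) * / (y * z * z))%C
    by (field; split; auto).
  rewrite !Cmod_mult, Cmod_inv, !Cmod_mult by (repeat apply Cmult_neq_0; auto).
  fold m. pose proof (Cmod_ge_0 (y - z)). set (t := Cmod (y - z)) in *.
  apply Rle_trans with (t * t * / (m / 2 * m * m)).
  { apply Rmult_le_compat_l; [nra|]. apply Rinv_le_contravar; [lra|].
    apply Rmult_le_compat_r; [lra|]. apply Rmult_le_compat_r; lra. }
  assert (t * / (m / 2 * m * m) <= e).
  { apply (Rmult_le_reg_r (m / 2 * m * m)); auto.
    rewrite Rmult_assoc, Rinv_l by lra. lra. }
  nra.
Qed.

Lemma is_Cderive_comp (g h : C -> C) (z lg lh : C) : is_Cderive h z lh -> is_Cderive g (h z) lg ->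
  is_Cderive (fun y => g (h y)) z (lg * lh).
Proof.
  intros Hh Hg e He.
  set (Lh := Cmod lh + 1). set (Lg := Cmod lg + 1).
  assert (HLh : 0 < Lh) by (unfold Lh; pose proof (Cmod_ge_0 lh); lra).
  assert (HLg : 0 < Lg) by (unfold Lg; pose proof (Cmod_ge_0 lg); lra).
  set (e1 := e / (2 * Lh)). set (e2 := Rmin 1 (e / (2 * Lg))).
  assert (He1 : 0 < e1) by (unfold e1; apply Rdiv_lt_0_compat; lra).
  assert (He2 : 0 < e2) by (unfold e2; apply Rmin_glb_lt; [lra|apply Rdiv_lt_0_compat; lra]).
  destruct (Hg e1 He1) as [dg [Hdg Hg']].
  destruct (Hh e2 He2) as [dh [Hdh Hh']].
  exists (Rmin dh (dg / Lh)). split; [apply Rmin_glb_lt; auto; apply Rdiv_lt_0_compat; lra|].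
  intros y Hy.
  assert (Hy1 : Cmod (y - z) < dh) by (eapply Rlt_le_trans; [apply Hy|apply Rmin_l]).
  assert (Hy2 : Cmod (y - z) < dg / Lh) by (eapply Rlt_le_trans; [apply Hy|apply Rmin_r]).
  specialize (Hh' y Hy1).
  pose proof (Cmod_ge_0 (y - z)) as Hm0.
  assert (E2 : e2 <= 1) by apply Rmin_l. assert (E2' : e2 <= e / (2 * Lg)) by apply Rmin_r.
  assert (Hhy : Cmod (h y - h z) <= Lh * Cmod (y - z)).
  { replace (h y - h z)%C with ((h y - h z - lh * (y - z)) + lh * (y - z))%C by ring.
    eapply Rle_trans; [apply Cmod_triangle|]. rewrite Cmod_mult. unfold Lh. nra. }
  assert (Hhy' : Cmod (h y - h z) < dg).
  { eapply Rle_lt_trans; [apply Hhy|].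
    replace dg with (Lh * (dg / Lh)) by (field; lra). apply Rmult_lt_compat_l; auto. }
  specialize (Hg' (h y) Hhy').
  replace (g (h y) - g (h z) - lg * lh * (y - z))%C with
    ((g (h y) - g (h z) - lg * (h y - h z)) + lg * (h y - h z - lh * (y - z)))%C by ring.
  eapply Rle_trans; [apply Cmod_triangle|]. rewrite Cmod_mult.
  assert (T1 : e1 * Cmod (h y - h z) <= e / 2 * Cmod (y - z)).
  { apply Rle_trans with (e1 * (Lh * Cmod (y - z))); [apply Rmult_le_compat_l; lra|].
    right. unfold e1. field. lra. }
  assert (T2 : Cmod lg * Cmod (h y - h z - lh * (y - z)) <= e / 2 * Cmod (y - z)).
  { apply Rle_trans with (Lg * (e2 * Cmod (y - z))).
    { apply Rmult_le_compat; auto using Cmod_ge_0. unfold Lg; lra. }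
    apply Rle_trans with (Lg * (e / (2 * Lg) * Cmod (y - z))).
    { apply Rmult_le_compat_l; [lra|]. apply Rmult_le_compat_r; auto. }
    right. field. lra. }
  lra.
Qed.

Lemma is_Cderive_local (g h : C -> C) (z l : C) (r : R) : 0 < r ->
  (forall y, Cmod (y - z) < r -> g y = h y) ->
  is_Cderive h z l -> is_Cderive g z l.
Proof.
  intros Hr E H e He. destruct (H e He) as [d [Hd H']].
  exists (Rmin d r). split; [apply Rmin_glb_lt; auto|]. intros y Hy.
  assert (Hy1 : Cmod (y - z) < d) by (eapply Rlt_le_trans; [apply Hy|apply Rmin_l]).
  assert (Hy2 : Cmod (y - z) < r) by (eapply Rlt_le_trans; [apply Hy|apply Rmin_r]).
  rewrite (E y Hy2), (E z) by (rewrite Cmod_self_sub; auto). auto.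
Qed.

Lemma ex_Cderive_continuous (g : C -> C) (z : C) : ex_Cderive g z -> Ccontinuous g z.
Proof. intros [l H]. eapply is_Cderive_continuous; eauto. Qed.

Lemma ex_Cderive_ext (g h : C -> C) (z : C) : (forall y, g y = h y) -> ex_Cderive g z -> ex_Cderive h z.
Proof.
  intros E [l H]. exists l. apply (is_Cderive_local _ g z l 1); auto; lra.
Qed.

Lemma ex_Cderive_const (c z : C) : ex_Cderive (fun _ => c) z.
Proof. eexists. apply is_Cderive_const. Qed.

Lemma ex_Cderive_id (z : C) : ex_Cderive (fun y => y) z.
Proof. eexists. apply is_Cderive_id. Qed.

Lemma ex_Cderive_plus (g h : C -> C) (z : C) : ex_Cderive g z -> ex_Cderive h z ->
  ex_Cderive (fun y => g y + h y)%C z.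
Proof. intros [l1 H1] [l2 H2]. eexists. apply is_Cderive_plus; eauto. Qed.

Lemma ex_Cderive_mult (g h : C -> C) (z : C) : ex_Cderive g z -> ex_Cderive h z ->
  ex_Cderive (fun y => g y * h y)%C z.
Proof. intros [l1 H1] [l2 H2]. eexists. apply is_Cderive_mult; eauto. Qed.

Lemma ex_Cderive_minus (g h : C -> C) (z : C) : ex_Cderive g z -> ex_Cderive h z ->
  ex_Cderive (fun y => g y - h y)%C z.
Proof.
  intros Hg Hh. apply (ex_Cderive_ext (fun y => g y + (-1) * h y)%C); [intros; ring|].
  apply ex_Cderive_plus, ex_Cderive_mult; auto using ex_Cderive_const.
Qed.

Lemma ex_Cderive_comp (g h : C -> C) (z : C) : ex_Cderive h z -> ex_Cderive g (h z) ->
  ex_Cderive (fun y => g (h y)) z.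
Proof. intros [l1 H1] [l2 H2]. eexists. apply is_Cderive_comp; eauto. Qed.

Lemma ex_Cderive_inv (h : C -> C) (z : C) : ex_Cderive h z -> h z <> 0%C ->
  ex_Cderive (fun y => / h y)%C z.
Proof.
  intros H Hz. apply (ex_Cderive_comp Cinv h z H). eexists. apply is_Cderive_Cinv; auto.
Qed.

Lemma ex_Cderive_pow (g : C -> C) (n : nat) (z : C) : ex_Cderive g z ->
  ex_Cderive (fun y => g y ^ n)%C z.
Proof.
  intros H. induction n as [|n IH]; simpl; [apply ex_Cderive_const|].
  apply ex_Cderive_mult; auto.
Qed.

Lemma ex_Cderive_shift (g : C -> C) (k z : C) : ex_Cderive g (z + k)%C ->
  ex_Cderive (fun u => g (u + k)%C) z.
Proof.
  intros H. apply (ex_Cderive_comp g (fun u => u + k)%C); auto.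
  apply ex_Cderive_plus; [apply ex_Cderive_id|apply ex_Cderive_const].
Qed.

Lemma ball_C_Cmod (z y : C) (d : R) : Cmod (y - z) < d -> @ball C_UniformSpace z d y.
Proof.
  intros H. pose proof (re_le_Cmod (y - z)). pose proof (Rabs_Im_le_Cmod (y - z)).
  split; [change (Rabs (fst y - fst z) < d)|change (Rabs (snd y - snd z) < d)];
    simpl in *; unfold Rminus; lra.
Qed.

Lemma is_derive_is_Cderive (f : C -> C) (z l : C) :
  @is_derive C_AbsRing C_NormedModule f z l -> is_Cderive f z l.
Proof.
  intros [_ H] e He.
  destruct (H z (fun P HP => HP) (mkposreal e He)) as [[d Hd] Hball].
  exists d. split; auto. intros y Hy. specialize (Hball y Hy). simpl in Hball.
  change (Cmod (f y - f z - (y - z) * l) <= e * Cmod (y - z)) in Hball.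
  rewrite (Cmult_comm l). exact Hball.
Qed.

Lemma ex_derive_ex_Cderive (f : C -> C) (z : C) :
  @ex_derive C_AbsRing C_NormedModule f z -> ex_Cderive f z.
Proof. intros [l H]. exists l. apply is_derive_is_Cderive; auto. Qed.

(** * Integrals along segments and rectangles *)

(* Coquelicot states [RInt_plus] and friends with the generic [plus] and [scal]; these
   instances are phrased with [Rplus] and [Rmult] so that they can be used by [rewrite]. *)
Lemma RInt_Rplus (f g : R -> R) (a b : R) : ex_RInt f a b -> ex_RInt g a b ->
  RInt (fun t => f t + g t) a b = RInt f a b + RInt g a b.
Proof. intros; apply (RInt_plus f g); auto. Qed.

Lemma RInt_Rminus (f g : R -> R) (a b : R) : ex_RInt f a b -> ex_RInt g a b ->
  RInt (fun t => f t - g t) a b = RInt f a b - RInt g a b.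
Proof. intros; apply (RInt_minus f g); auto. Qed.

Lemma RInt_Rmult (f : R -> R) (k a b : R) : ex_RInt f a b ->
  RInt (fun t => k * f t) a b = k * RInt f a b.
Proof. intros; apply (RInt_scal f); auto. Qed.

Lemma ex_RInt_Rplus (f g : R -> R) (a b : R) : ex_RInt f a b -> ex_RInt g a b ->
  ex_RInt (fun t => f t + g t) a b.
Proof. intros; apply (ex_RInt_plus f g); auto. Qed.

Lemma ex_RInt_Rmult (f : R -> R) (k a b : R) : ex_RInt f a b -> ex_RInt (fun t => k * f t) a b.
Proof. intros; apply (ex_RInt_scal f); auto. Qed.

Definition seg_int (g : C -> C) (p : R -> C) (a b : R) : C :=
  (RInt (fun t => fst (g (p t))) a b, RInt (fun t => snd (g (p t))) a b).

Definition seg_integrable (g : C -> C) (p : R -> C) (a b : R) :=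
  ex_RInt (fun t => fst (g (p t))) a b /\ ex_RInt (fun t => snd (g (p t))) a b.

Definition lipschitz1 (p : R -> C) := forall s t, Cmod (p s - p t) <= Rabs (s - t).

Section Segment.

Variables (p : R -> C) (a b : R).

Lemma seg_integrable_continuous (g : C -> C) : lipschitz1 p ->
  (forall t, Rmin a b <= t <= Rmax a b -> Ccontinuous g (p t)) -> seg_integrable g p a b.
Proof.
  intros Hp Hc.
  split; apply (ex_RInt_continuous (V := R_CompleteNormedModule)); intros t Ht;
    apply continuity_pt_filterlim; intros e He; destruct (Hc t Ht e He) as [d [Hd H]];
    exists d; split; auto; intros x [_ Hx]; simpl in Hx |- *; unfold R_dist, Rdist in *;
    (eapply Rle_lt_trans; [|apply (H (p x)); eapply Rle_lt_trans; [apply Hp|apply Hx]]).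
  - apply (re_le_Cmod (g (p x) - g (p t))).
  - apply (Rabs_Im_le_Cmod (g (p x) - g (p t))).
Qed.

Lemma seg_integrable_ext (g h : C -> C) :
  (forall t, Rmin a b <= t <= Rmax a b -> g (p t) = h (p t)) ->
  seg_integrable g p a b -> seg_integrable h p a b.
Proof.
  intros H [G1 G2].
  split; [eapply ex_RInt_ext; [|exact G1]|eapply ex_RInt_ext; [|exact G2]];
    intros t Ht; simpl; rewrite H; auto; lra.
Qed.

Lemma seg_integrable_plus (g h : C -> C) : seg_integrable g p a b -> seg_integrable h p a b ->
  seg_integrable (fun z => g z + h z)%C p a b.
Proof. intros [G1 G2] [H1 H2]; split; simpl; apply ex_RInt_Rplus; auto. Qed.

Lemma seg_integrable_scal (g : C -> C) (k : C) : seg_integrable g p a b ->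
  seg_integrable (fun z => k * g z)%C p a b.
Proof.
  intros [G1 G2]. split; simpl;
    [apply (ex_RInt_ext (fun t => fst k * fst (g (p t)) + (- snd k) * snd (g (p t))))
    |apply (ex_RInt_ext (fun t => fst k * snd (g (p t)) + snd k * fst (g (p t))))];
    try (intros; simpl; ring); apply ex_RInt_Rplus; apply ex_RInt_Rmult; auto.
Qed.

Lemma seg_integrable_minus (g h : C -> C) : seg_integrable g p a b -> seg_integrable h p a b ->
  seg_integrable (fun z => g z - h z)%C p a b.
Proof.
  intros G H. apply (seg_integrable_ext (fun z => g z + (-1) * h z)%C); [intros; ring|].
  apply seg_integrable_plus, seg_integrable_scal; auto.
Qed.

Lemma seg_int_ext (g h : C -> C) :
  (forall t, Rmin a b <= t <= Rmax a b -> g (p t) = h (p t)) -> seg_int g p a b = seg_int h p a b.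
Proof. intros H. unfold seg_int. f_equal; apply RInt_ext; intros t Ht; rewrite H; auto; lra. Qed.

Lemma seg_int_plus (g h : C -> C) : seg_integrable g p a b -> seg_integrable h p a b ->
  seg_int (fun z => g z + h z)%C p a b = (seg_int g p a b + seg_int h p a b)%C.
Proof. intros [G1 G2] [H1 H2]. unfold seg_int. simpl. rewrite !RInt_Rplus; auto. Qed.

Lemma seg_int_scal (g : C -> C) (k : C) : seg_integrable g p a b ->
  seg_int (fun z => k * g z)%C p a b = (k * seg_int g p a b)%C.
Proof.
  intros [G1 G2]. unfold seg_int, Cmult. simpl.
  rewrite RInt_Rminus, RInt_Rplus, !RInt_Rmult; auto; apply ex_RInt_Rmult; auto.
Qed.

Lemma seg_int_minus (g h : C -> C) : seg_integrable g p a b -> seg_integrable h p a b ->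
  seg_int (fun z => g z - h z)%C p a b = (seg_int g p a b - seg_int h p a b)%C.
Proof.
  intros G H. rewrite (seg_int_ext _ (fun z => g z + (-1) * h z)%C) by (intros; ring).
  rewrite seg_int_plus, seg_int_scal by auto using seg_integrable_scal. ring.
Qed.

Lemma seg_int_bound (g : C -> C) (M : R) : a <= b -> seg_integrable g p a b ->
  (forall t, a <= t <= b -> Cmod (g (p t)) <= M) -> Cmod (seg_int g p a b) <= 2 * (b - a) * M.
Proof.
  intros Hab [G1 G2] HM. eapply Rle_trans; [apply Cmod_le_Rabs_sum|]. unfold seg_int; simpl.
  assert (Rabs (RInt (fun t => fst (g (p t))) a b) <= (b - a) * M).
  { apply abs_RInt_le_const; auto. intros t Ht.
    eapply Rle_trans; [apply re_le_Cmod|]. apply HM; auto. }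
  assert (Rabs (RInt (fun t => snd (g (p t))) a b) <= (b - a) * M).
  { apply abs_RInt_le_const; auto. intros t Ht.
    eapply Rle_trans; [apply Rabs_Im_le_Cmod|]. apply HM; auto. }
  lra.
Qed.

Lemma seg_bounded (g : C -> C) : a <= b -> lipschitz1 p ->
  (forall t, a <= t <= b -> Ccontinuous g (p t)) ->
  exists M, 0 <= M /\ forall t, a <= t <= b -> Cmod (g (p t)) <= M.
Proof.
  intros Hab Hp Hc.
  destruct (continuity_ab_maj (fun t => Cmod (g (p t))) a b Hab) as [x [Hx _]].
  - intros t Ht e He. destruct (Hc t Ht e He) as [d [Hd H]]. exists d. split; auto.
    intros y [_ Hy]. simpl in *. unfold R_dist in *.
    specialize (H (p y) (Rle_lt_trans _ _ _ (Hp y t) Hy)).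
    pose proof (Cmod_sub_ge (g (p y)) (g (p t))). pose proof (Cmod_sub_ge (g (p t)) (g (p y))).
    rewrite Cmod_sub_sym in H1. apply Rabs_def1; lra.
  - exists (Cmod (g (p x))). split; [apply Cmod_ge_0|]. auto.
Qed.

End Segment.

Lemma seg_int_Chasles (g : C -> C) (p : R -> C) (a b c : R) :
  seg_integrable g p a b -> seg_integrable g p b c ->
  (seg_int g p a b + seg_int g p b c)%C = seg_int g p a c.
Proof.
  intros [G1 G2] [H1 H2]. unfold seg_int, Cplus. simpl.
  f_equal; apply (RInt_Chasles (V := R_CompleteNormedModule)); auto.
Qed.

Definition hpath (c : R) : R -> C := fun t => (t, c).
Definition vpath (x : R) : R -> C := fun s => (x, s).

Lemma lipschitz1_hpath (c : R) : lipschitz1 (hpath c).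
Proof.
  intros s t. unfold hpath. eapply Rle_trans; [apply Cmod_le_Rabs_sum|]. simpl.
  replace (c + - c) with 0 by ring. rewrite Rabs_R0. unfold Rminus. lra.
Qed.

Lemma lipschitz1_vpath (x : R) : lipschitz1 (vpath x).
Proof.
  intros s t. unfold vpath. eapply Rle_trans; [apply Cmod_le_Rabs_sum|]. simpl.
  replace (x + - x) with 0 by ring. rewrite Rabs_R0. unfold Rminus. lra.
Qed.

(* Counterclockwise contour integral over the boundary of [a,b] x [c,d]; dz = i dt on the
   vertical sides. *)
Definition rect_int (g : C -> C) (a b c d : R) : C :=
  (seg_int g (hpath c) a b + Ci * seg_int g (vpath b) c d
   - seg_int g (hpath d) a b - Ci * seg_int g (vpath a) c d)%C.

Definition rect_integrable (g : C -> C) (a b c d : R) :=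
  seg_integrable g (hpath c) a b /\ seg_integrable g (vpath b) c d /\
  seg_integrable g (hpath d) a b /\ seg_integrable g (vpath a) c d.

Definition on_boundary (a b c d : R) (z : C) :=
  (Rmin a b <= fst z <= Rmax a b /\ Rmin c d <= snd z <= Rmax c d) /\
  (fst z = a \/ fst z = b \/ snd z = c \/ snd z = d).

Section Rectangle.

Variables a b c d : R.

Lemma on_boundary_bottom (t : R) : Rmin a b <= t <= Rmax a b -> on_boundary a b c d (hpath c t).
Proof. intros Ht. repeat split; simpl; try tauto; [apply Rmin_l|apply Rmax_l]. Qed.

Lemma on_boundary_top (t : R) : Rmin a b <= t <= Rmax a b -> on_boundary a b c d (hpath d t).
Proof. intros Ht. repeat split; simpl; try tauto; [apply Rmin_r|apply Rmax_r]. Qed.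

Lemma on_boundary_left (t : R) : Rmin c d <= t <= Rmax c d -> on_boundary a b c d (vpath a t).
Proof. intros Ht. repeat split; simpl; try tauto; [apply Rmin_l|apply Rmax_l]. Qed.

Lemma on_boundary_right (t : R) : Rmin c d <= t <= Rmax c d -> on_boundary a b c d (vpath b t).
Proof. intros Ht. repeat split; simpl; try tauto; [apply Rmin_r|apply Rmax_r]. Qed.

Lemma rect_integrable_continuous (g : C -> C) :
  (forall z, on_boundary a b c d z -> Ccontinuous g z) -> rect_integrable g a b c d.
Proof.
  intros H. split; [|split; [|split]]; apply seg_integrable_continuous;
    auto using lipschitz1_hpath, lipschitz1_vpath; intros t Ht; apply H;
    auto using on_boundary_bottom, on_boundary_top, on_boundary_left, on_boundary_right.
Qed.

Lemma rect_integrable_minus (g h : C -> C) : rect_integrable g a b c d ->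
  rect_integrable h a b c d -> rect_integrable (fun z => g z - h z)%C a b c d.
Proof.
  intros (G1&G2&G3&G4) (H1&H2&H3&H4). split; [|split; [|split]]; apply seg_integrable_minus; auto.
Qed.

Lemma rect_integrable_scal (g : C -> C) (k : C) : rect_integrable g a b c d ->
  rect_integrable (fun z => k * g z)%C a b c d.
Proof. intros (G1&G2&G3&G4). split; [|split; [|split]]; apply seg_integrable_scal; auto. Qed.

Lemma rect_int_plus (g h : C -> C) : rect_integrable g a b c d -> rect_integrable h a b c d ->
  rect_int (fun z => g z + h z)%C a b c d = (rect_int g a b c d + rect_int h a b c d)%C.
Proof. intros (G1&G2&G3&G4) (H1&H2&H3&H4). unfold rect_int. rewrite !seg_int_plus; auto. ring. Qed.

Lemma rect_int_minus (g h : C -> C) : rect_integrable g a b c d -> rect_integrable h a b c d ->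
  rect_int (fun z => g z - h z)%C a b c d = (rect_int g a b c d - rect_int h a b c d)%C.
Proof. intros (G1&G2&G3&G4) (H1&H2&H3&H4). unfold rect_int. rewrite !seg_int_minus; auto. ring. Qed.

Lemma rect_int_scal (g : C -> C) (k : C) : rect_integrable g a b c d ->
  rect_int (fun z => k * g z)%C a b c d = (k * rect_int g a b c d)%C.
Proof. intros (G1&G2&G3&G4). unfold rect_int. rewrite !seg_int_scal; auto. ring. Qed.

Lemma rect_int_ext (g h : C -> C) : (forall z, on_boundary a b c d z -> g z = h z) ->
  rect_int g a b c d = rect_int h a b c d.
Proof.
  intros H. unfold rect_int. rewrite (seg_int_ext (hpath c) a b g h),
    (seg_int_ext (hpath d) a b g h), (seg_int_ext (vpath a) c d g h), (seg_int_ext (vpath b) c d g h);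
    auto; intros t Ht; apply H;
    auto using on_boundary_bottom, on_boundary_top, on_boundary_left, on_boundary_right.
Qed.

Lemma rect_int_bound (g : C -> C) (M : R) : a <= b -> c <= d -> rect_integrable g a b c d ->
  (forall z, on_boundary a b c d z -> Cmod (g z) <= M) ->
  Cmod (rect_int g a b c d) <= 4 * ((b - a) + (d - c)) * M.
Proof.
  intros Hab Hcd (G1&G2&G3&G4) HM.
  assert (Hx : forall t, a <= t <= b -> Rmin a b <= t <= Rmax a b)
    by (intros; rewrite Rmin_left, Rmax_right; lra).
  assert (Hy : forall t, c <= t <= d -> Rmin c d <= t <= Rmax c d)
    by (intros; rewrite Rmin_left, Rmax_right; lra).
  assert (Cmod (seg_int g (hpath c) a b) <= 2 * (b - a) * M)
    by (apply seg_int_bound; auto using on_boundary_bottom).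
  assert (Cmod (seg_int g (hpath d) a b) <= 2 * (b - a) * M)
    by (apply seg_int_bound; auto using on_boundary_top).
  assert (Cmod (seg_int g (vpath b) c d) <= 2 * (d - c) * M)
    by (apply seg_int_bound; auto using on_boundary_right).
  assert (Cmod (seg_int g (vpath a) c d) <= 2 * (d - c) * M)
    by (apply seg_int_bound; auto using on_boundary_left).
  unfold rect_int. eapply Rle_trans; [apply Cmod_sub_le|].
  eapply Rle_trans; [apply Rplus_le_compat_r, Cmod_sub_le|].
  eapply Rle_trans; [apply Rplus_le_compat_r, Rplus_le_compat_r, Cmod_triangle|].
  rewrite !Cmod_mult, Cmod_Ci. lra.
Qed.

Lemma rect_bounded (g : C -> C) : a <= b -> c <= d ->
  (forall z, on_boundary a b c d z -> Ccontinuous g z) ->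
  exists M, 0 <= M /\ forall z, on_boundary a b c d z -> Cmod (g z) <= M.
Proof.
  intros Hab Hcd Hc.
  assert (Hx : forall t, a <= t <= b -> Rmin a b <= t <= Rmax a b)
    by (intros; rewrite Rmin_left, Rmax_right; lra).
  assert (Hy : forall t, c <= t <= d -> Rmin c d <= t <= Rmax c d)
    by (intros; rewrite Rmin_left, Rmax_right; lra).
  destruct (seg_bounded (hpath c) a b g) as [M1 [P1 H1]];
    auto using lipschitz1_hpath, on_boundary_bottom.
  destruct (seg_bounded (hpath d) a b g) as [M2 [P2 H2]];
    auto using lipschitz1_hpath, on_boundary_top.
  destruct (seg_bounded (vpath a) c d g) as [M3 [P3 H3]];
    auto using lipschitz1_vpath, on_boundary_left.
  destruct (seg_bounded (vpath b) c d g) as [M4 [P4 H4]];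
    auto using lipschitz1_vpath, on_boundary_right.
  exists (M1 + M2 + M3 + M4). split; [lra|].
  intros [x y] [[Hxr Hyr] Hb]. simpl in *. rewrite Rmin_left, Rmax_right in Hxr, Hyr by lra.
  destruct Hb as [E|[E|[E|E]]]; subst;
    [specialize (H3 y Hyr)|specialize (H4 y Hyr)|specialize (H1 x Hxr)|specialize (H2 x Hxr)];
    unfold hpath, vpath in *; lra.
Qed.

End Rectangle.

Lemma rect_int_split_x (g : C -> C) (a m b c d : R) :
  rect_integrable g a m c d -> rect_integrable g m b c d ->
  rect_int g a b c d = (rect_int g a m c d + rect_int g m b c d)%C.
Proof.
  intros (G1&G2&G3&G4) (H1&H2&H3&H4). unfold rect_int.
  rewrite <- (seg_int_Chasles g (hpath c) a m b), <- (seg_int_Chasles g (hpath d) a m b); auto. ring.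
Qed.

Lemma rect_int_split_y (g : C -> C) (a b c m d : R) :
  rect_integrable g a b c m -> rect_integrable g a b m d ->
  rect_int g a b c d = (rect_int g a b c m + rect_int g a b m d)%C.
Proof.
  intros (G1&G2&G3&G4) (H1&H2&H3&H4). unfold rect_int.
  rewrite <- (seg_int_Chasles g (vpath b) c m d), <- (seg_int_Chasles g (vpath a) c m d); auto. ring.
Qed.

(** * Goursat's theorem *)

Lemma RInt_affine (al be a b : R) :
  RInt (fun t => al + be * t) a b = al * (b - a) + be * (b * b - a * a) / 2.
Proof.
  apply is_RInt_unique.
  replace (al * (b - a) + be * (b * b - a * a) / 2) with
    ((al * b + be * (b * b) / 2) - (al * a + be * (a * a) / 2)) by field.
  apply (is_RInt_derive (fun t => al * t + be * (t * t) / 2)).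
  - intros x _. auto_derive; auto. field.
  - intros x _. apply continuity_pt_filterlim, continuity_pt_plus.
    + apply continuity_pt_const. intros u v; auto.
    + apply continuity_pt_scal, continuity_pt_id.
Qed.

Lemma seg_int_affine_hpath (A B : C) (c a b : R) : seg_int (fun z => A + B * z)%C (hpath c) a b =
  ((fst A - snd B * c) * (b - a) + fst B * (b * b - a * a) / 2,
   (snd A + fst B * c) * (b - a) + snd B * (b * b - a * a) / 2).
Proof. unfold seg_int, hpath. f_equal; rewrite <- RInt_affine; apply RInt_ext; intros; simpl; ring. Qed.

Lemma seg_int_affine_vpath (A B : C) (x c d : R) : seg_int (fun z => A + B * z)%C (vpath x) c d =
  ((fst A + fst B * x) * (d - c) + (- snd B) * (d * d - c * c) / 2,
   (snd A + snd B * x) * (d - c) + fst B * (d * d - c * c) / 2).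
Proof. unfold seg_int, vpath. f_equal; rewrite <- RInt_affine; apply RInt_ext; intros; simpl; ring. Qed.

Lemma rect_int_affine (A B : C) (a b c d : R) : rect_int (fun z => A + B * z)%C a b c d = 0%C.
Proof.
  unfold rect_int. rewrite !seg_int_affine_hpath, !seg_int_affine_vpath.
  apply injective_projections; simpl; field.
Qed.

Lemma rect_int_local_bound (g : C -> C) (w l : C) : (forall z, Ccontinuous g z) ->
  is_Cderive g w l -> forall e, 0 < e -> exists del, 0 < del /\
  forall a b c d, a <= fst w <= b -> c <= snd w <= d -> (b - a) + (d - c) < del ->
  Cmod (rect_int g a b c d) <= 4 * ((b - a) + (d - c)) * (e * ((b - a) + (d - c))).
Proof.
  intros Hc Hl e He. destruct (Hl e He) as [del [Hdel Hw]]. exists del. split; auto.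
  intros a b c d Hx Hy Hs.
  set (h := fun z : C => (g w - l * w + l * z)%C).
  assert (Hh : forall z, Ccontinuous h z).
  { intros z. apply ex_Cderive_continuous, ex_Cderive_plus, ex_Cderive_mult;
      auto using ex_Cderive_const, ex_Cderive_id. }
  assert (Hint : forall f, (forall z, Ccontinuous f z) -> rect_integrable f a b c d)
    by (intros; apply rect_integrable_continuous; auto).
  replace (rect_int g a b c d) with (rect_int (fun z => g z - h z)%C a b c d)
    by (rewrite rect_int_minus by auto; unfold h; rewrite rect_int_affine; ring).
  apply rect_int_bound; try lra; auto using rect_integrable_minus.
  intros z [[Hz1 Hz2] _]. rewrite Rmin_left, Rmax_right in Hz1, Hz2 by lra.
  assert (Hzw : Cmod (z - w) <= (b - a) + (d - c)).
  { eapply Rle_trans; [apply Cmod_le_Rabs_sum|]. simpl.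
    apply Rplus_le_compat; apply Rabs_le; lra. }
  replace (g z - h z)%C with (g z - g w - l * (z - w))%C by (unfold h; ring).
  eapply Rle_trans; [apply Hw; lra|]. apply Rmult_le_compat_l; lra.
Qed.

Record rectangle := Rect { rx0 : R; rx1 : R; ry0 : R; ry1 : R }.

Definition rint (g : C -> C) (Q : rectangle) := rect_int g (rx0 Q) (rx1 Q) (ry0 Q) (ry1 Q).

Definition xmid (Q : rectangle) := (rx0 Q + rx1 Q) / 2.
Definition ymid (Q : rectangle) := (ry0 Q + ry1 Q) / 2.
Definition quad_sw (Q : rectangle) := Rect (rx0 Q) (xmid Q) (ry0 Q) (ymid Q).
Definition quad_se (Q : rectangle) := Rect (xmid Q) (rx1 Q) (ry0 Q) (ymid Q).
Definition quad_nw (Q : rectangle) := Rect (rx0 Q) (xmid Q) (ymid Q) (ry1 Q).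
Definition quad_ne (Q : rectangle) := Rect (xmid Q) (rx1 Q) (ymid Q) (ry1 Q).

(* Some quadrant carries at least a quarter of the integral, by the triangle inequality,
   so the final fallback is justified. *)
Definition bisect (g : C -> C) (Q : rectangle) : rectangle :=
  if Rle_dec (Cmod (rint g Q) / 4) (Cmod (rint g (quad_sw Q))) then quad_sw Q else
  if Rle_dec (Cmod (rint g Q) / 4) (Cmod (rint g (quad_se Q))) then quad_se Q else
  if Rle_dec (Cmod (rint g Q) / 4) (Cmod (rint g (quad_nw Q))) then quad_nw Q else quad_ne Q.

Definition bisect_iter (g : C -> C) (Q : rectangle) (n : nat) := Nat.iter n (bisect g) Q.

Lemma nested_point (u v : nat -> R) :
  (forall n, u n <= u (S n)) -> (forall n, v (S n) <= v n) -> (forall n, u n <= v n) ->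
  exists x, forall n, u n <= x <= v n.
Proof.
  intros Hu Hv Huv.
  assert (Hmu : forall n m, (n <= m)%nat -> u n <= u m)
    by (intros n m Hnm; induction Hnm; [lra|specialize (Hu m); lra]).
  assert (Hmv : forall n m, (n <= m)%nat -> v m <= v n)
    by (intros n m Hnm; induction Hnm; [lra|specialize (Hv m); lra]).
  assert (Huv' : forall n m, u n <= v m).
  { intros n m. destruct (Nat.le_ge_cases n m) as [H|H].
    - specialize (Hmu n m H). specialize (Huv m). lra.
    - specialize (Hmv m n H). specialize (Huv n). lra. }
  destruct (completeness (fun x => exists n, x = u n)) as [x [Hub Hlub]].
  - exists (v 0%nat). intros y [n ->]. apply Huv'.
  - exists (u 0%nat). exists 0%nat. auto.
  - exists x. intros n. split.
    + apply Hub. exists n. auto.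
    + apply Hlub. intros y [k ->]. apply Huv'.
Qed.

Section Bisection.

Variable g : C -> C.
Hypothesis g_cont : forall z, Ccontinuous g z.

Lemma rint_quadrants (Q : rectangle) :
  rint g Q = (rint g (quad_sw Q) + rint g (quad_se Q) + rint g (quad_nw Q) + rint g (quad_ne Q))%C.
Proof.
  assert (Hint : forall a b c d, rect_integrable g a b c d)
    by (intros; apply rect_integrable_continuous; auto).
  unfold rint, quad_sw, quad_se, quad_nw, quad_ne; simpl.
  rewrite (rect_int_split_y g _ _ _ (ymid Q)), (rect_int_split_x g _ (xmid Q) _ (ry0 Q)),
    (rect_int_split_x g _ (xmid Q) _ (ymid Q)) by auto.
  ring.
Qed.

Lemma rint_bisect (Q : rectangle) : Cmod (rint g Q) <= 4 * Cmod (rint g (bisect g Q)).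
Proof.
  pose proof (rint_quadrants Q) as E. unfold bisect.
  destruct (Rle_dec _ _); [lra|]. destruct (Rle_dec _ _); [lra|]. destruct (Rle_dec _ _); [lra|].
  apply (f_equal Cmod) in E.
  pose proof (Cmod_triangle (rint g (quad_sw Q) + rint g (quad_se Q) + rint g (quad_nw Q))
    (rint g (quad_ne Q))).
  pose proof (Cmod_triangle (rint g (quad_sw Q) + rint g (quad_se Q)) (rint g (quad_nw Q))).
  pose proof (Cmod_triangle (rint g (quad_sw Q)) (rint g (quad_se Q))).
  lra.
Qed.

Lemma bisect_iter_size (Q : rectangle) (n : nat) :
  rx1 (bisect_iter g Q n) - rx0 (bisect_iter g Q n) = (rx1 Q - rx0 Q) * (/2) ^ n /\
  ry1 (bisect_iter g Q n) - ry0 (bisect_iter g Q n) = (ry1 Q - ry0 Q) * (/2) ^ n.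
Proof.
  induction n as [|n [IH1 IH2]]; simpl; [split; ring|].
  fold (bisect_iter g Q n). unfold bisect, quad_sw, quad_se, quad_nw, quad_ne, xmid, ymid.
  set (t := (/2) ^ n) in *.
  replace ((rx1 Q - rx0 Q) * (/ 2 * t)) with ((rx1 Q - rx0 Q) * t / 2) by field.
  replace ((ry1 Q - ry0 Q) * (/ 2 * t)) with ((ry1 Q - ry0 Q) * t / 2) by field.
  repeat destruct (Rle_dec _ _); simpl; split; lra.
Qed.

Lemma bisect_iter_nested (Q : rectangle) (n : nat) : rx0 Q <= rx1 Q -> ry0 Q <= ry1 Q ->
  rx0 (bisect_iter g Q n) <= rx0 (bisect_iter g Q (S n)) /\
  rx1 (bisect_iter g Q (S n)) <= rx1 (bisect_iter g Q n) /\
  ry0 (bisect_iter g Q n) <= ry0 (bisect_iter g Q (S n)) /\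
  ry1 (bisect_iter g Q (S n)) <= ry1 (bisect_iter g Q n).
Proof.
  intros Hx Hy. destruct (bisect_iter_size Q n) as [E1 E2].
  assert (0 <= (/2) ^ n) by (apply pow_le; lra).
  assert (0 <= rx1 (bisect_iter g Q n) - rx0 (bisect_iter g Q n)) by (rewrite E1; nra).
  assert (0 <= ry1 (bisect_iter g Q n) - ry0 (bisect_iter g Q n)) by (rewrite E2; nra).
  simpl. fold (bisect_iter g Q n). unfold bisect, quad_sw, quad_se, quad_nw, quad_ne, xmid, ymid.
  repeat destruct (Rle_dec _ _); simpl; lra.
Qed.

Lemma rint_bisect_iter (Q : rectangle) (n : nat) :
  Cmod (rint g Q) <= 4 ^ n * Cmod (rint g (bisect_iter g Q n)).
Proof.
  induction n as [|n IH]; simpl; [lra|].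
  pose proof (rint_bisect (bisect_iter g Q n)). assert (0 <= 4 ^ n) by (apply pow_le; lra).
  fold (bisect_iter g Q n). nra.
Qed.

Lemma bisect_iter_common_point (Q : rectangle) : rx0 Q <= rx1 Q -> ry0 Q <= ry1 Q ->
  exists w : C, forall n, rx0 (bisect_iter g Q n) <= fst w <= rx1 (bisect_iter g Q n) /\
                          ry0 (bisect_iter g Q n) <= snd w <= ry1 (bisect_iter g Q n).
Proof.
  intros Hx Hy. pose proof (bisect_iter_nested Q) as Hnest. pose proof (bisect_iter_size Q) as Hsize.
  assert (Hp : forall n, 0 <= (/2) ^ n) by (intros; apply pow_le; lra).
  destruct (nested_point (fun n => rx0 (bisect_iter g Q n)) (fun n => rx1 (bisect_iter g Q n)))
    as [x Hxn]; try (intros n; apply Hnest; auto);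
    [intros n; destruct (Hsize n); specialize (Hp n); nra|].
  destruct (nested_point (fun n => ry0 (bisect_iter g Q n)) (fun n => ry1 (bisect_iter g Q n)))
    as [y Hyn]; try (intros n; apply Hnest; auto);
    [intros n; destruct (Hsize n); specialize (Hp n); nra|].
  exists (x, y). auto.
Qed.

End Bisection.

Theorem goursat (g : C -> C) (a b c d : R) : a <= b -> c <= d -> (forall z, Ccontinuous g z) ->
  (forall z, a <= fst z <= b -> c <= snd z <= d -> ex_Cderive g z) -> rect_int g a b c d = 0%C.
Proof.
  intros Hab Hcd Hc Hd.
  set (Q := bisect_iter g (Rect a b c d)).
  destruct (bisect_iter_common_point g (Rect a b c d) Hab Hcd) as [[x y] Hxy]. fold Q in Hxy.
  assert (Hsize := bisect_iter_size g (Rect a b c d)). fold Q in Hsize. simpl in Hsize.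
  assert (Hp : forall n, 0 <= (/2) ^ n) by (intros; apply pow_le; lra).
  destruct (Hd (x, y)) as [l Hl]; [apply (Hxy 0%nat)|apply (Hxy 0%nat)|].
  apply Cmod_eq_0, Rle_antisym; [|apply Cmod_ge_0]. apply Rnot_lt_le. intro Hpos.
  set (I := Cmod (rect_int g a b c d)) in *. set (s := (b - a) + (d - c)).
  assert (Hs : 0 <= s) by (unfold s; lra).
  set (e := I / (8 * (s * s) + 1)).
  assert (He : 0 < e) by (unfold e; apply Rdiv_lt_0_compat; nra).
  destruct (rect_int_local_bound g (x, y) l Hc Hl e He) as [del [Hdel Hloc]].
  destruct (pow_lt_1_zero (/2)) with (y := del / (s + 1)) as [N HN];
    [rewrite Rabs_pos_eq; lra|apply Rdiv_lt_0_compat; lra|].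
  specialize (HN N (le_n N)). rewrite Rabs_pos_eq in HN by auto.
  destruct (Hsize N) as [W H]. destruct (Hxy N) as [Hx Hy]. simpl in Hx, Hy.
  assert (HsN : (rx1 (Q N) - rx0 (Q N)) + (ry1 (Q N) - ry0 (Q N)) = s * (/2) ^ N)
    by (rewrite W, H; unfold s; ring).
  assert (Hsmall : s * (/2) ^ N < del).
  { apply Rle_lt_trans with ((s + 1) * (/2) ^ N); [specialize (Hp N); nra|].
    replace del with ((s + 1) * (del / (s + 1))) by (field; lra).
    apply Rmult_lt_compat_l; lra. }
  specialize (Hloc _ _ _ _ Hx Hy ltac:(lra)). rewrite HsN in Hloc.
  assert (H4 : 4 ^ N * ((/2) ^ N * (/2) ^ N) = 1)
    by (rewrite <- !Rpow_mult_distr; replace (4 * (/ 2 * / 2)) with 1 by field; apply pow1).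
  assert (Hbound : I <= 4 * (s * s) * e).
  { eapply Rle_trans; [apply (rint_bisect_iter g Hc (Rect a b c d) N)|]. fold (Q N).
    apply Rle_trans with (4 ^ N * (4 * (s * (/2) ^ N) * (e * (s * (/2) ^ N)))).
    - apply Rmult_le_compat_l; [apply pow_le; lra|exact Hloc].
    - right. replace (4 ^ N * (4 * (s * (/2) ^ N) * (e * (s * (/2) ^ N))))
        with (4 * (s * s) * e * (4 ^ N * ((/2) ^ N * (/2) ^ N))) by ring.
      rewrite H4. ring. }
  assert (e * (8 * (s * s) + 1) = I) by (unfold e; field; nra).
  nra.
Qed.

Lemma ex_pos_below (l : list R) : (forall x, In x l -> 0 < x) ->
  exists e, 0 < e /\ forall x, In x l -> e < x.
Proof.
  induction l as [|x l IH]; intros Hpos; [exists 1; split; [lra|easy]|].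
  destruct IH as [e [He Hl]]; [intros; apply Hpos; right; auto|].
  exists (Rmin e (x / 2)). split.
  - apply Rmin_glb_lt; auto. specialize (Hpos x (or_introl eq_refl)). lra.
  - intros y [<-|Hy].
    + specialize (Hpos x (or_introl eq_refl)). pose proof (Rmin_r e (x / 2)). lra.
    + specialize (Hl y Hy). pose proof (Rmin_l e (x / 2)). lra.
Qed.

Section Punctured.

Variables (g : C -> C) (u : C).
Hypothesis g_cont : forall z, Ccontinuous g z.
Hypothesis g_diff : forall z, z <> u -> ex_Cderive g z.

Lemma rect_int_shrink (a b c d del : R) : 0 < del ->
  a < fst u - del -> fst u + del < b -> c < snd u - del -> snd u + del < d ->
  rect_int g a b c d = rect_int g (fst u - del) (fst u + del) (snd u - del) (snd u + del).
Proof.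
  intros H0 H1 H2 H3 H4.
  assert (Hint : forall a b c d, rect_integrable g a b c d)
    by (intros; apply rect_integrable_continuous; auto).
  assert (Hgoursat : forall a b c d, a <= b -> c <= d ->
    (forall z, a <= fst z <= b -> c <= snd z <= d -> z <> u) -> rect_int g a b c d = 0%C)
    by (intros; apply goursat; auto).
  rewrite (rect_int_split_x g a (fst u - del) b), (rect_int_split_x g (fst u - del) (fst u + del) b),
    (rect_int_split_y g (fst u - del) (fst u + del) c (snd u - del) d),
    (rect_int_split_y g (fst u - del) (fst u + del) (snd u - del) (snd u + del) d) by auto.
  rewrite (Hgoursat a (fst u - del) c d), (Hgoursat (fst u + del) b c d),
    (Hgoursat (fst u - del) (fst u + del) c (snd u - del)),
    (Hgoursat (fst u - del) (fst u + del) (snd u + del) d);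
    try lra; try ring; intros z Hzx Hzy E; subst z; lra.
Qed.

Theorem goursat_punctured (a b c d : R) : a < fst u < b -> c < snd u < d ->
  rect_int g a b c d = 0%C.
Proof.
  intros Hx Hy.
  destruct (g_cont u 1 Rlt_0_1) as [d0 [Hd0 Hu]].
  set (K := Cmod (g u) + 1). assert (HK : 0 < K) by (pose proof (Cmod_ge_0 (g u)); unfold K; lra).
  assert (Hsquare : forall del, 0 < del -> del < d0 / 2 ->
    Cmod (rect_int g (fst u - del) (fst u + del) (snd u - del) (snd u + del)) <= 16 * del * K).
  { intros del H0 H1. eapply Rle_trans.
    - apply rect_int_bound with (M := K); try lra.
      + apply rect_integrable_continuous; auto.
      + intros z [[Hz1 Hz2] _]. rewrite Rmin_left, Rmax_right in Hz1, Hz2 by lra.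
        assert (Hz : Cmod (z - u) < d0).
        { eapply Rle_lt_trans; [apply Cmod_le_Rabs_sum|]. simpl.
          assert (Rabs (fst z + - fst u) <= del) by (apply Rabs_le; lra).
          assert (Rabs (snd z + - snd u) <= del) by (apply Rabs_le; lra). lra. }
        replace (g z) with ((g z - g u) + g u)%C by ring.
        eapply Rle_trans; [apply Cmod_triangle|]. specialize (Hu z Hz). unfold K. lra.
    - right. ring. }
  apply Cmod_eq_0, Rle_antisym; [|apply Cmod_ge_0]. apply Rnot_lt_le. intro Hpos.
  set (I := Cmod (rect_int g a b c d)) in *.
  destruct (ex_pos_below [d0 / 2; I / (16 * K); fst u - a; b - fst u; snd u - c; d - snd u])
    as [del [Hdel Hlt]];
    [simpl; intros r Hr; repeat destruct Hr as [<-|Hr]; try lra;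
     try (apply Rdiv_lt_0_compat; lra); easy|].
  assert (Hs : del < d0 / 2 /\ del < I / (16 * K) /\ del < fst u - a /\ del < b - fst u /\
    del < snd u - c /\ del < d - snd u) by (repeat split; apply Hlt; simpl; tauto).
  destruct Hs as (Hs1 & Hs2 & Hs3 & Hs4 & Hs5 & Hs6).
  specialize (Hsquare del Hdel Hs1).
  unfold I in *. rewrite (rect_int_shrink a b c d del) in * by lra.
  set (J := Cmod (rect_int g (fst u - del) (fst u + del) (snd u - del) (snd u + del))) in *.
  assert (J / (16 * K) * (16 * K) = J) by (field; lra).
  nra.
Qed.

End Punctured.

(** * Cauchy's formula and the identity theorem *)

Lemma Cmod_sub_pos (z u : C) : z <> u -> 0 < Cmod (z - u).
Proof. intros H. apply Cmod_gt_0, Cminus_eq_contra, H. Qed.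

Definition diff_quot (f : C -> C) (L u z : C) : C :=
  if Ceq_dec z u then L else ((f z - f u) / (z - u))%C.

Section Cauchy.

Variable f : C -> C.
Hypothesis f_diff : forall z, ex_Cderive f z.

Lemma diff_quot_ex_Cderive (L u z : C) : z <> u -> ex_Cderive (diff_quot f L u) z.
Proof.
  intros Hz.
  assert (HD : ex_Cderive (fun y => (f y - f u) / (y - u))%C z).
  { apply ex_Cderive_mult; [apply ex_Cderive_minus; auto using ex_Cderive_const|].
    apply ex_Cderive_inv; [apply ex_Cderive_minus; auto using ex_Cderive_id, ex_Cderive_const|].
    apply Cminus_eq_contra; auto. }
  destruct HD as [l Hl]. exists l.
  apply (is_Cderive_local _ (fun y => (f y - f u) / (y - u))%C z l (Cmod (z - u)));
    auto using Cmod_sub_pos.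
  intros y Hy. unfold diff_quot. destruct (Ceq_dec y u) as [->|_]; auto.
  rewrite Cmod_sub_sym in Hy. lra.
Qed.

Lemma diff_quot_continuous (L u z : C) : is_Cderive f u L -> Ccontinuous (diff_quot f L u) z.
Proof.
  intros HL. destruct (Ceq_dec z u) as [->|Hz];
    [|apply ex_Cderive_continuous, diff_quot_ex_Cderive; auto].
  intros e He. destruct (HL (e/2)) as [d [Hd H]]; [lra|]. exists d. split; auto.
  intros y Hy. unfold diff_quot. destruct (Ceq_dec u u) as [_|]; [|congruence].
  destruct (Ceq_dec y u) as [->|Hyu]; [rewrite Cmod_self_sub; auto|].
  specialize (H y Hy). pose proof (Cmod_sub_pos y u Hyu).
  replace ((f y - f u) / (y - u) - L)%C with ((f y - f u - L * (y - u)) / (y - u))%C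
    by (field; apply Cminus_eq_contra; auto).
  rewrite Cmod_div by (apply Cminus_eq_contra; auto).
  apply Rle_lt_trans with (e / 2); [|lra].
  apply (Rmult_le_reg_r (Cmod (y - u))); auto. unfold Rdiv. rewrite Rmult_assoc, Rinv_l; lra.
Qed.

(* Cauchy's integral formula on a rectangle, up to the value [2 i pi] of the last integral. *)
Theorem rect_int_cauchy (u : C) (a b c d : R) : a < fst u < b -> c < snd u < d ->
  rect_int (fun z => f z / (z - u))%C a b c d = (f u * rect_int (fun z => / (z - u))%C a b c d)%C.
Proof.
  intros Hx Hy. destruct (f_diff u) as [L HL].
  assert (Hne : forall z, on_boundary a b c d z -> z <> u).
  { intros z [[Hz1 Hz2] Hb] ->. rewrite Rmin_left, Rmax_right in Hz1, Hz2 by lra. lra. }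
  assert (Hinv : forall z, on_boundary a b c d z -> ex_Cderive (fun y => / (y - u))%C z).
  { intros z Hz. apply ex_Cderive_inv; [|apply Cminus_eq_contra; auto].
    apply ex_Cderive_minus; auto using ex_Cderive_id, ex_Cderive_const. }
  assert (Hq : rect_integrable (diff_quot f L u) a b c d)
    by (apply rect_integrable_continuous; intros; apply diff_quot_continuous; auto).
  assert (Hk : rect_integrable (fun z => f u * / (z - u))%C a b c d).
  { apply rect_integrable_continuous. intros z Hz.
    apply ex_Cderive_continuous, ex_Cderive_mult; auto using ex_Cderive_const. }
  rewrite (rect_int_ext a b c d _ (fun z => diff_quot f L u z + f u * / (z - u))%C).
  - rewrite rect_int_plus, rect_int_scal, (goursat_punctured (diff_quot f L u) u); auto.
    + ring.
    + intros z. apply diff_quot_continuous; auto.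
    + intros z Hz. apply diff_quot_ex_Cderive; auto.
    + apply rect_integrable_continuous. intros z Hz. apply ex_Cderive_continuous; auto.
  - intros z Hz. unfold diff_quot. destruct (Ceq_dec z u) as [E|NE]; [exfalso; apply (Hne z); auto|].
    field. apply Cminus_eq_contra; auto.
Qed.

End Cauchy.

Lemma RInt_ge_const (f : R -> R) (a b m : R) : a <= b -> ex_RInt f a b ->
  (forall t, a < t < b -> m <= f t) -> (b - a) * m <= RInt f a b.
Proof.
  intros Hab Hf H.
  replace ((b - a) * m) with (RInt (fun _ => m) a b) by (rewrite RInt_const; reflexivity).
  apply RInt_le; auto. apply ex_RInt_const.
Qed.

Lemma RInt_le_const (f : R -> R) (a b m : R) : a <= b -> ex_RInt f a b ->
  (forall t, a < t < b -> f t <= m) -> RInt f a b <= (b - a) * m.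
Proof.
  intros Hab Hf H.
  replace ((b - a) * m) with (RInt (fun _ => m) a b) by (rewrite RInt_const; reflexivity).
  apply RInt_le; auto. apply ex_RInt_const.
Qed.

Lemma Cinv_edge_bounds (X A : R) : 0 < A -> Rabs X <= A ->
  1 / (2 * A) <= snd (Cinv (X, - A)) /\ snd (Cinv (X, A)) <= - (1 / (2 * A)) /\
  1 / (2 * A) <= fst (Cinv (A, X)) /\ fst (Cinv (- A, X)) <= - (1 / (2 * A)).
Proof.
  intros HA HX. unfold Cinv. simpl.
  assert (HXA : X * X <= A * A) by (apply Rsqr_le_abs_1; rewrite (Rabs_pos_eq A); lra).
  assert (Hk : 1 / (2 * A) <= A / (X * (X * 1) + A * (A * 1))).
  { replace (X * (X * 1) + A * (A * 1)) with (X * X + A * A) by ring.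
    apply Rle_trans with (A / (A * A + A * A)); [right; field; nra|].
    unfold Rdiv. apply Rmult_le_compat_l; [lra|].
    assert (0 <= X * X) by apply Rle_0_sqr.
    apply Rinv_le_contravar; nra. }
  replace (- A * (- A * 1)) with (A * (A * 1)) by ring.
  replace (A * (A * 1) + X * (X * 1)) with (X * (X * 1) + A * (A * 1)) by ring.
  unfold Rdiv in *. repeat split; lra.
Qed.

Lemma Im_rect_int (g : C -> C) (a b c d : R) : snd (rect_int g a b c d) =
  snd (seg_int g (hpath c) a b) + fst (seg_int g (vpath b) c d)
  - snd (seg_int g (hpath d) a b) - fst (seg_int g (vpath a) c d).
Proof. unfold rect_int, Ci, Cmult, Cminus, Cplus, Copp. simpl. ring. Qed.

Lemma rect_int_inv_Im_pos (w : C) (A : R) : 0 < A ->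
  0 < snd (rect_int (fun z => / (z - w))%C (fst w - A) (fst w + A) (snd w - A) (snd w + A)).
Proof.
  intros HA. destruct w as [wx wy]. cbn [fst snd].
  assert (Hint : rect_integrable (fun z => / (z - (wx, wy)))%C
                   (wx - A) (wx + A) (wy - A) (wy + A)).
  { apply rect_integrable_continuous. intros z [_ Hz].
    apply ex_Cderive_continuous, ex_Cderive_inv;
      [apply ex_Cderive_minus; auto using ex_Cderive_id, ex_Cderive_const|].
    apply Cminus_eq_contra. intros ->. simpl in Hz. lra. }
  destruct Hint as (G1 & G2 & G3 & G4).
  assert (Hx : forall t, wx - A < t < wx + A -> Rabs (t - wx) <= A) by (intros; apply Rabs_le; lra).
  assert (Hy : forall t, wy - A < t < wy + A -> Rabs (t - wy) <= A) by (intros; apply Rabs_le; lra).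
  assert (E : forall x y, ((x, y) - (wx, wy))%C = (x - wx, y - wy))
    by (intros; apply injective_projections; simpl; ring).
  assert (I1 : (2 * A) * (1 / (2 * A)) <=
    RInt (fun t => snd (/ (hpath (wy - A) t - (wx, wy)))%C) (wx - A) (wx + A)).
  { replace (2 * A) with (wx + A - (wx - A)) at 1 by ring. apply RInt_ge_const; [lra|apply G1|].
    intros t Ht. unfold hpath. rewrite E. replace (wy - A - wy) with (- A) by ring.
    apply Cinv_edge_bounds; auto. }
  assert (I2 : (2 * A) * (1 / (2 * A)) <=
    RInt (fun t => fst (/ (vpath (wx + A) t - (wx, wy)))%C) (wy - A) (wy + A)).
  { replace (2 * A) with (wy + A - (wy - A)) at 1 by ring. apply RInt_ge_const; [lra|apply G2|].
    intros t Ht. unfold vpath. rewrite E. replace (wx + A - wx) with A by ring.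
    apply Cinv_edge_bounds; auto. }
  assert (I3 : RInt (fun t => snd (/ (hpath (wy + A) t - (wx, wy)))%C) (wx - A) (wx + A)
    <= (2 * A) * (- (1 / (2 * A)))).
  { replace (2 * A) with (wx + A - (wx - A)) at 1 by ring. apply RInt_le_const; [lra|apply G3|].
    intros t Ht. unfold hpath. rewrite E. replace (wy + A - wy) with A by ring.
    apply Cinv_edge_bounds; auto. }
  assert (I4 : RInt (fun t => fst (/ (vpath (wx - A) t - (wx, wy)))%C) (wy - A) (wy + A)
    <= (2 * A) * (- (1 / (2 * A)))).
  { replace (2 * A) with (wy + A - (wy - A)) at 1 by ring. apply RInt_le_const; [lra|apply G4|].
    intros t Ht. unfold vpath. rewrite E. replace (wx - A - wx) with (- A) by ring.
    apply Cinv_edge_bounds; auto. }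
  replace ((2 * A) * (1 / (2 * A))) with 1 in I1, I2 by (field; lra).
  replace ((2 * A) * (- (1 / (2 * A)))) with (-1) in I3, I4 by (field; lra).
  rewrite Im_rect_int. unfold seg_int. cbn [fst snd]. lra.
Qed.

Lemma Cmod_add_R_sub (w : C) (t : R) : Cmod (w + t - w) = Rabs t.
Proof. replace (w + t - w)%C with (RtoC t) by ring. apply Cmod_R. Qed.

(* [J n u := kernel_int n u] plays the role of the Taylor remainders of [J 0] at [w0]
   ([kernel_int_succ]).  If [J 0] vanishes on a punctured real segment through [w0], every
   [J n w0] vanishes, and the geometric bound of [kernel_int_bound] then kills [J 0] on the
   whole disc of radius [D], without any power series. *)
Section Kernel.

Variables (f : C -> C) (a b c d : R) (w0 : C) (D : R).
Hypothesis f_diff : forall z, ex_Cderive f z.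
Hypothesis Hab : a <= b.
Hypothesis Hcd : c <= d.
Hypothesis D_pos : 0 < D.
Hypothesis boundary_far : forall z, on_boundary a b c d z -> D <= Cmod (z - w0).

Definition kernel_int (n : nat) (u : C) : C :=
  rect_int (fun z => f z / ((z - w0) ^ n * (z - u)))%C a b c d.

Lemma boundary_sep (z u : C) : on_boundary a b c d z -> Cmod (u - w0) < D ->
  D - Cmod (u - w0) <= Cmod (z - u).
Proof.
  intros Hz Hu. pose proof (boundary_far z Hz). pose proof (Cmod_sub_ge (z - w0) (u - w0)).
  replace (z - w0 - (u - w0))%C with (z - u)%C in H0 by ring. lra.
Qed.

Lemma boundary_ne (z u : C) : on_boundary a b c d z -> Cmod (u - w0) < D -> (z - u)%C <> 0%C.
Proof.
  intros Hz Hu E. pose proof (boundary_sep z u Hz Hu). rewrite E, Cmod_0 in H. lra.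
Qed.

Lemma boundary_ne_center (z : C) (n : nat) : on_boundary a b c d z -> ((z - w0) ^ n)%C <> 0%C.
Proof.
  intros Hz. apply Cpow_nz, boundary_ne; auto. rewrite Cmod_self_sub; auto.
Qed.

Lemma kernel_integrable (n : nat) (u : C) : Cmod (u - w0) < D ->
  rect_integrable (fun z => f z / ((z - w0) ^ n * (z - u)))%C a b c d.
Proof.
  intros Hu. apply rect_integrable_continuous. intros z Hz.
  apply ex_Cderive_continuous, ex_Cderive_mult; auto.
  apply ex_Cderive_inv;
    [|apply Cmult_neq_0; auto using boundary_ne_center, boundary_ne].
  apply ex_Cderive_mult; [apply ex_Cderive_pow|];
    apply ex_Cderive_minus; auto using ex_Cderive_id, ex_Cderive_const.
Qed.

Lemma kernel_int_bound : exists K, 0 <= K /\ forall n u, Cmod (u - w0) < D ->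
  Cmod (kernel_int n u) <= K / (D ^ n * (D - Cmod (u - w0))).
Proof.
  destruct (rect_bounded a b c d f) as [M [HM0 HM]]; auto.
  { intros z _. apply ex_Cderive_continuous; auto. }
  exists (4 * ((b - a) + (d - c)) * M). split; [apply Rmult_le_pos; lra|].
  intros n u Hu. unfold kernel_int, Rdiv. rewrite Rmult_assoc.
  apply rect_int_bound; [exact Hab|exact Hcd|apply kernel_integrable; exact Hu|].
  intros z Hz. pose proof (boundary_far z Hz). pose proof (boundary_sep z u Hz Hu).
  assert (HDn : 0 < D ^ n) by (apply pow_lt; lra).
  assert (Hne : ((z - w0) ^ n * (z - u))%C <> 0%C)
    by (apply Cmult_neq_0; [apply boundary_ne_center|apply boundary_ne]; assumption).
  rewrite Cmod_div by exact Hne. rewrite Cmod_mult, Cmod_pow.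
  unfold Rdiv. apply Rmult_le_compat; [apply Cmod_ge_0| |apply HM; exact Hz|].
  - left. apply Rinv_0_lt_compat, Rmult_lt_0_compat; [apply pow_lt|]; apply Cmod_gt_0.
    + apply boundary_ne; [exact Hz|rewrite Cmod_self_sub; lra].
    + apply boundary_ne; assumption.
  - apply Rinv_le_contravar; [apply Rmult_lt_0_compat; lra|].
    apply Rmult_le_compat; [apply pow_le; lra|lra|apply pow_incr; lra|lra].
Qed.

Lemma kernel_int_succ (n : nat) (u : C) : Cmod (u - w0) < D ->
  kernel_int n u = (kernel_int n w0 + (u - w0) * kernel_int (S n) u)%C.
Proof.
  intros Hu. unfold kernel_int.
  assert (Hw0 : Cmod (w0 - w0) < D) by (rewrite Cmod_self_sub; auto).
  rewrite <- rect_int_scal, <- rect_int_plus by auto using kernel_integrable, rect_integrable_scal.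
  apply rect_int_ext. intros z Hz. simpl.
  pose proof (boundary_ne z u Hz Hu). pose proof (boundary_ne z w0 Hz Hw0).
  pose proof (boundary_ne_center z n Hz). field. auto.
Qed.

Lemma kernel_int_step (n : nat) (r : R) : 0 < r <= D / 2 ->
  (forall t, 0 < Rabs t < r -> kernel_int n (w0 + t) = 0%C) ->
  kernel_int n w0 = 0%C /\ forall t, 0 < Rabs t < r -> kernel_int (S n) (w0 + t) = 0%C.
Proof.
  intros Hr Hn. destruct kernel_int_bound as [K [HK HJ]].
  set (K1 := K / (D ^ S n * (D / 2))).
  assert (HK1 : 0 <= K1).
  { unfold K1, Rdiv. apply Rmult_le_pos; auto. left.
    apply Rinv_0_lt_compat, Rmult_lt_0_compat; [apply pow_lt|]; lra. }
  assert (Hclose : forall t, Rabs t < r -> Cmod (w0 + t - w0) < D)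
    by (intros; rewrite Cmod_add_R_sub; lra).
  assert (HJS : forall t, Rabs t < r -> Cmod (kernel_int (S n) (w0 + t)) <= K1).
  { intros t Ht. eapply Rle_trans; [apply HJ; auto|]. rewrite Cmod_add_R_sub.
    unfold K1, Rdiv. apply Rmult_le_compat_l; auto. apply Rinv_le_contravar.
    - apply Rmult_lt_0_compat; [apply pow_lt|]; lra.
    - apply Rmult_le_compat_l; [apply pow_le|]; lra. }
  assert (Hcenter : forall t, 0 < Rabs t < r -> Cmod (kernel_int n w0) <= Rabs t * K1).
  { intros t Ht. specialize (Hn t Ht). rewrite kernel_int_succ in Hn by (apply Hclose; lra).
    replace (kernel_int n w0) with (- ((w0 + t - w0) * kernel_int (S n) (w0 + t)))%C
      by (rewrite <- (Cplus_0_l (- _)), <- Hn; ring).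
    rewrite Cmod_opp, Cmod_mult, Cmod_add_R_sub.
    apply Rmult_le_compat_l; [apply Rabs_pos|]. apply HJS. lra. }
  assert (Hz : kernel_int n w0 = 0%C).
  { apply Cmod_eq_0, Rle_antisym; [|apply Cmod_ge_0]. apply Rnot_lt_le. intro Hp.
    set (J := Cmod (kernel_int n w0)) in *.
    set (t := Rmin (r / 2) (J / (2 * (K1 + 1)))).
    assert (Ht1 : t <= r / 2) by apply Rmin_l.
    assert (Ht2 : t <= J / (2 * (K1 + 1))) by apply Rmin_r.
    assert (Ht : 0 < t) by (apply Rmin_glb_lt; [lra|apply Rdiv_lt_0_compat; lra]).
    specialize (Hcenter t). rewrite Rabs_pos_eq in Hcenter by lra. specialize (Hcenter ltac:(lra)).
    assert (J / (2 * (K1 + 1)) * (2 * (K1 + 1)) = J) by (field; lra).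
    nra. }
  split; auto.
  intros t Ht. specialize (Hn t Ht). rewrite kernel_int_succ, Hz in Hn by (apply Hclose; lra).
  assert (Ht0 : (w0 + t - w0)%C <> 0%C)
    by (intro E; apply (f_equal Cmod) in E; rewrite Cmod_add_R_sub, Cmod_0 in E; lra).
  replace (kernel_int (S n) (w0 + t))
    with (/ (w0 + t - w0) * (0 + (w0 + t - w0) * kernel_int (S n) (w0 + t)))%C
    by (field; auto).
  rewrite Hn. ring.
Qed.

Theorem kernel_int_zero : (exists r, 0 < r /\ forall t, 0 < Rabs t < r -> kernel_int 0 (w0 + t) = 0%C) ->
  forall u, Cmod (u - w0) < D -> kernel_int 0 u = 0%C.
Proof.
  intros [r [Hr Hr0]] u Hu.
  set (r' := Rmin r (D / 2)).
  assert (Hr' : 0 < r' <= D / 2) by (split; [apply Rmin_glb_lt; lra|apply Rmin_r]).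
  assert (Hcenter : forall n, kernel_int n w0 = 0%C /\
    forall t, 0 < Rabs t < r' -> kernel_int (S n) (w0 + t) = 0%C).
  { induction n as [|n [_ IH]]; apply kernel_int_step; auto.
    intros t Ht. apply Hr0. pose proof (Rmin_l r (D / 2)). fold r' in H. lra. }
  assert (Hpow : forall N, kernel_int 0 u = ((u - w0) ^ N * kernel_int N u)%C).
  { induction N as [|N IH]; [simpl; ring|].
    rewrite IH, (kernel_int_succ N u Hu), (proj1 (Hcenter N)). simpl. ring. }
  destruct kernel_int_bound as [K [HK HJ]].
  set (q := Cmod (u - w0) / D).
  assert (Hq : 0 <= q < 1).
  { unfold q. split; [apply Rdiv_le_0_compat; auto using Cmod_ge_0|].
    apply (Rmult_lt_reg_r D); auto. unfold Rdiv. rewrite Rmult_assoc, Rinv_l; lra. }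
  set (B := K / (D - Cmod (u - w0))).
  assert (HB : 0 <= B) by (apply Rdiv_le_0_compat; lra).
  assert (Hdecay : forall N, Cmod (kernel_int 0 u) <= B * q ^ N).
  { intros N. rewrite (Hpow N), Cmod_mult, Cmod_pow.
    eapply Rle_trans; [apply Rmult_le_compat_l; [apply pow_le, Cmod_ge_0|apply HJ; auto]|].
    right. unfold B, q, Rdiv. rewrite Rpow_mult_distr, pow_inv. field.
    split; [apply pow_nonzero|]; lra. }
  apply Cmod_eq_0, Rle_antisym; [|apply Cmod_ge_0]. apply Rnot_lt_le. intro Hp.
  destruct (pow_lt_1_zero q) with (y := Cmod (kernel_int 0 u) / (B + 1)) as [N HN];
    [rewrite Rabs_pos_eq; lra|apply Rdiv_lt_0_compat; lra|].
  specialize (HN N (le_n N)). rewrite Rabs_pos_eq in HN by (apply pow_le; lra).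
  specialize (Hdecay N).
  assert (Cmod (kernel_int 0 u) / (B + 1) * (B + 1) = Cmod (kernel_int 0 u)) by (field; lra).
  assert (0 <= q ^ N) by (apply pow_le; lra).
  nra.
Qed.

End Kernel.

Lemma square_boundary_far (w : C) (A : R) (z : C) : 0 <= A ->
  on_boundary (fst w - A) (fst w + A) (snd w - A) (snd w + A) z ->
  A - Rabs (snd w) <= Cmod (z - RtoC (fst w)).
Proof.
  intros HA [_ Hb].
  assert (Hre : Rabs (fst z - fst w) <= Cmod (z - RtoC (fst w)))
    by exact (re_le_Cmod (z - RtoC (fst w))).
  assert (Him : Rabs (snd z) <= Cmod (z - RtoC (fst w))).
  { replace (snd z) with (snd (z - RtoC (fst w))%C) by (simpl; ring). apply Rabs_Im_le_Cmod. }
  pose proof (Rabs_triang_inv (snd z - snd w) (- snd w)) as Htri.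
  replace (snd z - snd w - - snd w) with (snd z) in Htri by ring. rewrite Rabs_Ropp in Htri.
  pose proof (Rabs_pos (snd w)).
  destruct Hb as [E|[E|[E|E]]]; rewrite E in *;
    [replace (fst w - A - fst w) with (- A) in Hre by ring; rewrite Rabs_Ropp in Hre
    |replace (fst w + A - fst w) with A in Hre by ring
    |replace (snd w - A - snd w) with (- A) in Htri by ring; rewrite Rabs_Ropp in Htri
    |replace (snd w + A - snd w) with A in Htri by ring];
    rewrite Rabs_pos_eq in * by lra; lra.
Qed.

(* Cauchy's formula on a square centred at [w] reduces [f w = 0] to the vanishing of
   [J 0 w], which follows from [kernel_int_zero] around the real point [Re w]. *)
Theorem entire_zero_of_real_zero (f : C -> C) : (forall z, ex_Cderive f z) ->
  (forall x : R, f x = 0%C) -> forall w, f w = 0%C.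
Proof.
  intros Hf Hreal w.
  set (A := 2 * Rabs (snd w) + 2). set (w0 := RtoC (fst w)).
  pose proof (Rabs_pos (snd w)) as Hw. pose proof (Rle_abs (snd w)).
  pose proof (Rle_abs (- snd w)). rewrite Rabs_Ropp in H0.
  set (a := fst w - A). set (b := fst w + A). set (c := snd w - A). set (d := snd w + A).
  assert (Hcauchy : forall u, a < fst u < b -> c < snd u < d ->
    kernel_int f a b c d w0 0 u = (f u * rect_int (fun z => / (z - u))%C a b c d)%C).
  { intros u Hx Hy. unfold kernel_int. rewrite <- rect_int_cauchy by auto.
    apply rect_int_ext. intros z _. simpl. rewrite Cmult_1_l. reflexivity. }
  assert (Hzero : forall u, Cmod (u - w0) < A - Rabs (snd w) -> kernel_int f a b c d w0 0 u = 0%C).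
  { apply kernel_int_zero; auto; try (unfold a, b, c, d, A; lra).
    - intros z Hz. apply square_boundary_far; auto. unfold A. lra.
    - exists 1. split; [lra|]. intros t [_ Ht]. apply Rabs_def2 in Ht.
      rewrite Hcauchy; unfold w0, a, b, c, d, A; simpl; try lra.
      rewrite <- RtoC_plus, Hreal. ring. }
  assert (Hww0 : Cmod (w - w0) = Rabs (snd w)).
  { replace (w - w0)%C with (Ci * RtoC (snd w))%C
      by (unfold w0; destruct w; apply injective_projections; simpl; ring).
    rewrite Cmod_mult, Cmod_Ci, Cmod_R. ring. }
  specialize (Hzero w ltac:(rewrite Hww0; unfold A; lra)).
  rewrite Hcauchy in Hzero by (unfold a, b, c, d, A; lra).
  pose proof (rect_int_inv_Im_pos w A ltac:(unfold A; lra)) as Hpos.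
  fold a b c d in Hpos. set (K := rect_int (fun z => / (z - w))%C a b c d) in *.
  assert (HK : K <> 0%C) by (intros E; rewrite E in Hpos; simpl in Hpos; lra).
  replace (f w) with (f w * K * / K)%C by (field; exact HK). rewrite Hzero. ring.
Qed.

(** * Commutation with integer translations *)

Lemma entire_fun_ex_Cderive_l (g : C2 -> C) (w z : C) :
  entire_fun g -> ex_Cderive (fun u => g (u, w)) z.
Proof. intros H. destruct (H z w) as (_ & H1 & _). apply ex_derive_ex_Cderive; auto. Qed.

Lemma entire_fun_ex_Cderive_r (g : C2 -> C) (w z : C) :
  entire_fun g -> ex_Cderive (fun u => g (w, u)) z.
Proof. intros H. destruct (H w z) as (_ & _ & H2). apply ex_derive_ex_Cderive; auto. Qed.

(* An identity between entire functions that holds on R^2 holds on C^2: apply the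
   one-variable identity theorem in each variable in turn. *)
Lemma entire_fun_translate (g : C2 -> C) (h : R2 -> R) (m n : Z) (s : R) :
  entire_fun g -> (forall x y : R, g (RtoC x, RtoC y) = RtoC (h (x, y))) ->
  (forall x y : R, h (x + IZR m, y + IZR n) = h (x, y) + s) ->
  forall z w : C, g ((z + IZR m)%C, (w + IZR n)%C) = (g (z, w) + s)%C.
Proof.
  intros Hg Hext Hper.
  set (e := fun z w => (g ((z + IZR m)%C, (w + IZR n)%C) - g (z, w) - s)%C).
  assert (Hreal : forall x y : R, e (RtoC x) (RtoC y) = 0%C).
  { intros x y. unfold e. rewrite <- !RtoC_plus, !Hext, Hper, RtoC_plus. ring. }
  assert (Hline : forall (y : R) u, e u (RtoC y) = 0%C).
  { intros y. apply (entire_zero_of_real_zero (fun u => e u (RtoC y))); [|intros x; apply Hreal].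
    intros z. unfold e. apply ex_Cderive_minus; [apply ex_Cderive_minus|apply ex_Cderive_const].
    - apply (ex_Cderive_shift (fun u => g (u, (RtoC y + IZR n)%C))), entire_fun_ex_Cderive_l; auto.
    - apply entire_fun_ex_Cderive_l; auto. }
  assert (Hall : forall u w, e u w = 0%C).
  { intros u. apply (entire_zero_of_real_zero (fun w => e u w)); [|intros y; apply Hline].
    intros z. unfold e. apply ex_Cderive_minus; [apply ex_Cderive_minus|apply ex_Cderive_const].
    - apply (ex_Cderive_shift (fun w => g ((u + IZR m)%C, w))), entire_fun_ex_Cderive_r; auto.
    - apply entire_fun_ex_Cderive_r; auto. }
  intros z w. specialize (Hall z w). unfold e in Hall.
  replace (g ((z + IZR m)%C, (w + IZR n)%C))
    with ((g ((z + IZR m)%C, (w + IZR n)%C) - g (z, w) - s) + (g (z, w) + s))%C by ring.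
  rewrite Hall. ring.
Qed.

Definition shift (m n : Z) (p : C2) : C2 := ((fst p + IZR m)%C, (snd p + IZR n)%C).

Lemma entire_lift_shift (F : C2 -> C2) (f : R2 -> R2) (m n : Z) (p : C2) :
  entire_map F -> extends f F -> lift_homotopic_id f -> F (shift m n p) = shift m n (F p).
Proof.
  intros [H1 H2] Hext Hlift. destruct p as [z w]. unfold shift. simpl.
  apply injective_projections; simpl;
    [apply (entire_fun_translate (fun p => fst (F p)) (fun p => fst (f p)) m n (IZR m) H1)
    |apply (entire_fun_translate (fun p => snd (F p)) (fun p => snd (f p)) m n (IZR n) H2)];
    intros x y; cbv beta; rewrite ?Hext, ?Hlift; reflexivity.
Qed.

Lemma lift_homotopic_id_inv (T Ti : R2 -> R2) : lift_homotopic_id T ->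
  (forall u, Ti (T u) = u) -> (forall u, T (Ti u) = u) -> lift_homotopic_id Ti.
Proof.
  intros HT H1 H2 x y m n.
  rewrite <- (H1 (fst (Ti (x, y)) + IZR m, snd (Ti (x, y)) + IZR n)), HT.
  rewrite <- surjective_pairing, H2. reflexivity.
Qed.

Lemma sin_cos_period_Z (x : R) (k : Z) :
  sin (x + 2 * PI * IZR k) = sin x /\ cos (x + 2 * PI * IZR k) = cos x.
Proof.
  destruct (Z_le_gt_dec 0 k) as [Hk|Hk].
  - rewrite <- (Z2Nat.id k Hk), <- INR_IZR_INZ.
    replace (x + 2 * PI * INR (Z.to_nat k)) with (x + 2 * INR (Z.to_nat k) * PI) by ring.
    split; [apply sin_period|apply cos_period].
  - assert (Hk' : (0 <= - k)%Z) by lia.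
    pose proof (sin_period (x + 2 * PI * IZR k) (Z.to_nat (- k))).
    pose proof (cos_period (x + 2 * PI * IZR k) (Z.to_nat (- k))).
    rewrite INR_IZR_INZ, (Z2Nat.id _ Hk'), opp_IZR in H, H0.
    replace (x + 2 * PI * IZR k + 2 * - IZR k * PI) with x in H, H0 by ring. split; auto.
Qed.

Lemma Csin_period_Z (z : C) (k : Z) : Csin (z + RtoC (2 * PI * IZR k))%C = Csin z.
Proof.
  unfold Csin, Re, Im, RtoC, Cplus. simpl. rewrite Rplus_0_r.
  destruct (sin_cos_period_Z (fst z) k) as [-> ->]. reflexivity.
Qed.

Lemma Rot_shift (a : R) (m n : Z) (p : C2) : Rot a (shift m n p) = shift m n (Rot a p).
Proof. unfold Rot, shift. simpl. f_equal. ring. Qed.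

Lemma Csin_2PIq_shift (q m : Z) (z : C) :
  Csin (RtoC (2 * PI * IZR q) * (z + IZR m))%C = Csin (RtoC (2 * PI * IZR q) * z)%C.
Proof.
  rewrite <- (Csin_period_Z (RtoC (2 * PI * IZR q) * z) (q * m)). f_equal.
  rewrite mult_IZR. apply injective_projections; simpl; ring.
Qed.

Lemma Phi_shift (q : Z) (c : R) (m n : Z) (p : C2) : Phi q c (shift m n p) = shift m n (Phi q c p).
Proof. unfold Phi, shift. simpl. rewrite Csin_2PIq_shift. f_equal; ring. Qed.

Lemma Phi_inv_shift (q : Z) (c : R) (m n : Z) (p : C2) :
  Phi_inv q c (shift m n p) = shift m n (Phi_inv q c p).
Proof.
  unfold Phi_inv, shift. simpl.
  replace (fst p + IZR m - RtoC (/ (2 * IZR q)))%C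
    with ((fst p - RtoC (/ (2 * IZR q))) + IZR m)%C by ring.
  rewrite Csin_2PIq_shift. f_equal; ring.
Qed.

Lemma iter_shift (F : C2 -> C2) (m n : Z) : (forall p, F (shift m n p) = shift m n (F p)) ->
  forall i p, Nat.iter i F (shift m n p) = shift m n (Nat.iter i F p).
Proof. intros H i. induction i as [|i IH]; intros p; simpl; [|rewrite IH]; auto. Qed.

Lemma Phi_inv_Rot_Phi_rational (p q : Z) (c : R) (w : C2) : IZR q <> 0 ->
  Phi_inv q c (Rot (IZR p / IZR q) (Phi q c w)) = Rot (IZR p / IZR q) w.
Proof.
  intros Hq. unfold Phi_inv, Phi, Rot. simpl.
  replace (fst w + RtoC (/ (2 * IZR q)) + RtoC (IZR p / IZR q) - RtoC (/ (2 * IZR q)))%C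
    with (fst w + RtoC (IZR p / IZR q))%C by ring.
  replace (RtoC (2 * PI * IZR q) * (fst w + RtoC (IZR p / IZR q)))%C
    with (RtoC (2 * PI * IZR q) * fst w + RtoC (2 * PI * IZR p))%C
    by (apply injective_projections; simpl; field; auto).
  rewrite Csin_period_Z. f_equal. ring.
Qed.

(** * Continuity in the parameter *)

Lemma continuity_pt_mult_2 (phi psi : R -> R) (x y : R) :
  continuity_pt phi x -> continuity_pt psi y ->
  forall e, 0 < e -> exists d, 0 < d /\ forall a b, Rabs (a - x) < d -> Rabs (b - y) < d ->
    Rabs (phi a * psi b - phi x * psi y) < e.
Proof.
  intros H1 H2 e He.
  assert (H : continuous (fun p : R * R => phi (fst p) * psi (snd p)) (x, y)).
  { apply (continuous_mult (K := R_AbsRing));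
      [apply (continuous_comp fst phi)|apply (continuous_comp snd psi)];
      auto using continuous_fst, continuous_snd; apply continuity_pt_filterlim; auto. }
  destruct (H _ (locally_ball (phi x * psi y) (mkposreal e He))) as [d Hd].
  exists d. split; [apply cond_pos|]. intros a b Ha Hb. apply (Hd (a, b)). split; auto.
Qed.

Lemma Ccontinuous_comp (g h : C -> C) (z : C) : Ccontinuous h z -> Ccontinuous g (h z) ->
  Ccontinuous (fun y => g (h y)) z.
Proof.
  intros Hh Hg e He. destruct (Hg e He) as [d1 [Hd1 K1]]. destruct (Hh d1 Hd1) as [d [Hd K]].
  exists d. split; auto.
Qed.

Lemma Ccontinuous_Csin (z : C) : Ccontinuous Csin z.
Proof.
  intros e He.
  destruct (continuity_pt_mult_2 sin cosh (fst z) (snd z) (continuity_sin _)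
    (derivable_continuous_pt _ _ (derivable_pt_cosh _)) (e/2)) as [d1 [Hd1 K1]]; [lra|].
  destruct (continuity_pt_mult_2 cos sinh (fst z) (snd z) (continuity_cos _)
    (derivable_continuous_pt _ _ (derivable_pt_sinh _)) (e/2)) as [d2 [Hd2 K2]]; [lra|].
  exists (Rmin d1 d2). split; [apply Rmin_glb_lt; auto|]. intros y Hy.
  pose proof (re_le_Cmod (y - z)). pose proof (Rabs_Im_le_Cmod (y - z)).
  pose proof (Rmin_l d1 d2). pose proof (Rmin_r d1 d2). simpl in *.
  specialize (K1 (fst y) (snd y) ltac:(unfold Rminus; lra) ltac:(unfold Rminus; lra)).
  specialize (K2 (fst y) (snd y) ltac:(unfold Rminus; lra) ltac:(unfold Rminus; lra)).
  eapply Rle_lt_trans; [apply Cmod_le_Rabs_sum|]. unfold Csin, Re, Im. simpl.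
  unfold Rminus in K1, K2. lra.
Qed.

Definition dist2 (x y : C2) := Cmod (fst x - fst y) + Cmod (snd x - snd y).

Definition C2Ccontinuous (g : C2 -> C) (x : C2) :=
  forall e, 0 < e -> exists d, 0 < d /\ forall y, dist2 y x < d -> Cmod (g y - g x) < e.

Definition C2continuous (F : C2 -> C2) (x : C2) :=
  forall e, 0 < e -> exists d, 0 < d /\ forall y, dist2 y x < d -> dist2 (F y) (F x) < e.

Definition param_continuous (F : R -> C2 -> C2) (a : R) (x : C2) :=
  forall e, 0 < e -> exists d, 0 < d /\
    forall b y, Rabs (b - a) < d -> dist2 y x < d -> dist2 (F b y) (F a x) < e.

Lemma dist2_sym (x y : C2) : dist2 x y = dist2 y x.
Proof. unfold dist2. rewrite (Cmod_sub_sym (fst x)), (Cmod_sub_sym (snd x)). auto. Qed.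

Lemma dist2_triangle (x y z : C2) : dist2 x z <= dist2 x y + dist2 y z.
Proof.
  unfold dist2.
  replace (fst x - fst z)%C with ((fst x - fst y) + (fst y - fst z))%C by ring.
  replace (snd x - snd z)%C with ((snd x - snd y) + (snd y - snd z))%C by ring.
  pose proof (Cmod_triangle (fst x - fst y) (fst y - fst z)).
  pose proof (Cmod_triangle (snd x - snd y) (snd y - snd z)). lra.
Qed.

Lemma Cmod_fst_le_dist2 (x y : C2) : Cmod (fst x - fst y) <= dist2 x y.
Proof. unfold dist2. pose proof (Cmod_ge_0 (snd x - snd y)). lra. Qed.

Lemma Cmod_snd_le_dist2 (x y : C2) : Cmod (snd x - snd y) <= dist2 x y.
Proof. unfold dist2. pose proof (Cmod_ge_0 (fst x - fst y)). lra. Qed.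

Lemma C2continuous_pair (g1 g2 : C2 -> C) (x : C2) : C2Ccontinuous g1 x -> C2Ccontinuous g2 x ->
  C2continuous (fun p => (g1 p, g2 p)) x.
Proof.
  intros H1 H2 e He. destruct (H1 (e/2)) as [d1 [Hd1 K1]]; [lra|].
  destruct (H2 (e/2)) as [d2 [Hd2 K2]]; [lra|].
  exists (Rmin d1 d2). split; [apply Rmin_glb_lt; auto|]. intros y Hy.
  specialize (K1 y (Rlt_le_trans _ _ _ Hy (Rmin_l _ _))).
  specialize (K2 y (Rlt_le_trans _ _ _ Hy (Rmin_r _ _))).
  unfold dist2. simpl. lra.
Qed.

Lemma C2continuous_comp (F G : C2 -> C2) (x : C2) : C2continuous F x -> C2continuous G (F x) ->
  C2continuous (fun y => G (F y)) x.
Proof.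
  intros HF HG e He. destruct (HG e He) as [d1 [Hd1 K1]]. destruct (HF d1 Hd1) as [d [Hd K]].
  exists d. split; auto.
Qed.

Lemma C2continuous_of_continuous (g : C2 -> C) (x : C2) :
  continuous (g : prod_UniformSpace C_UniformSpace C_UniformSpace -> C_UniformSpace) x ->
  C2Ccontinuous g x.
Proof.
  intros H e He.
  destruct (H _ (locally_ball (g x) (mkposreal (e/2) ltac:(lra)))) as [[d Hd] K].
  exists d. split; auto. intros y Hy.
  destruct (K y (conj (ball_C_Cmod _ _ _ (Rle_lt_trans _ _ _ (Cmod_fst_le_dist2 y x) Hy))
                       (ball_C_Cmod _ _ _ (Rle_lt_trans _ _ _ (Cmod_snd_le_dist2 y x) Hy))))
    as [K1 K2].
  change (Rabs (fst (g y) - fst (g x)) < e/2) in K1.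
  change (Rabs (snd (g y) - snd (g x)) < e/2) in K2.
  eapply Rle_lt_trans; [apply Cmod_le_Rabs_sum|]. simpl. unfold Rminus in *. lra.
Qed.

Lemma C2continuous_entire (F : C2 -> C2) (x : C2) : entire_map F -> C2continuous F x.
Proof.
  intros [H1 H2]. destruct x as [z w].
  exact (C2continuous_pair _ _ (z, w) (C2continuous_of_continuous _ _ (proj1 (H1 z w)))
    (C2continuous_of_continuous _ _ (proj1 (H2 z w)))).
Qed.

Lemma C2continuous_shear (k : C) (h : C -> C) (x : C2) : (forall u, Ccontinuous h u) ->
  C2continuous (fun p => ((fst p + k)%C, (snd p + h (fst p))%C)) x.
Proof.
  intros Hh. apply C2continuous_pair.
  - intros e He. exists e. split; auto. intros y Hy.
    replace (fst y + k - (fst x + k))%C with (fst y - fst x)%C by ring.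
    pose proof (Cmod_fst_le_dist2 y x). lra.
  - intros e He. destruct (Hh (fst x) (e/2)) as [d [Hd K]]; [lra|].
    exists (Rmin d (e/2)). split; [apply Rmin_glb_lt; lra|]. intros y Hy.
    pose proof (Rmin_l d (e/2)). pose proof (Rmin_r d (e/2)).
    pose proof (Cmod_fst_le_dist2 y x). pose proof (Cmod_snd_le_dist2 y x).
    specialize (K (fst y) ltac:(lra)).
    replace (snd y + h (fst y) - (snd x + h (fst x)))%C
      with ((snd y - snd x) + (h (fst y) - h (fst x)))%C by ring.
    eapply Rle_lt_trans; [apply Cmod_triangle|]. lra.
Qed.

Lemma Ccontinuous_scal_Csin (c : C) (g : C -> C) (u : C) : ex_Cderive g u ->
  Ccontinuous (fun u => c * Csin (g u))%C u.
Proof.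
  intros Hg. apply (Ccontinuous_comp (fun v => c * Csin v)%C g); [apply ex_Cderive_continuous; auto|].
  apply (Ccontinuous_comp (fun v => c * v)%C Csin); [apply Ccontinuous_Csin|].
  apply ex_Cderive_continuous, ex_Cderive_mult; auto using ex_Cderive_const, ex_Cderive_id.
Qed.

Lemma C2continuous_Phi (q : Z) (c : R) (x : C2) : C2continuous (Phi q c) x.
Proof.
  apply (C2continuous_shear _ (fun u => RtoC c * Csin (RtoC (2 * PI * IZR q) * u))%C).
  intros u. apply Ccontinuous_scal_Csin, ex_Cderive_mult; auto using ex_Cderive_const, ex_Cderive_id.
Qed.

Lemma C2continuous_Phi_inv (q : Z) (c : R) (x : C2) : C2continuous (Phi_inv q c) x.
Proof.
  apply (C2continuous_shear _
    (fun u => - (RtoC c * Csin (RtoC (2 * PI * IZR q) * (u - RtoC (/ (2 * IZR q))))))%C).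
  intros u. apply (Ccontinuous_comp Copp).
  - apply Ccontinuous_scal_Csin, ex_Cderive_mult; [apply ex_Cderive_const|].
    apply ex_Cderive_minus; auto using ex_Cderive_const, ex_Cderive_id.
  - apply ex_Cderive_continuous, (ex_Cderive_ext (fun v => 0 - v)%C); [intros; ring|].
    apply ex_Cderive_minus; auto using ex_Cderive_const, ex_Cderive_id.
Qed.

Lemma param_continuous_Rot (a : R) (x : C2) : param_continuous Rot a x.
Proof.
  intros e He. exists (e/2). split; [lra|]. intros b y Hb Hy. unfold Rot, dist2 in *. simpl.
  replace (fst y + RtoC b - (fst x + RtoC a))%C with ((fst y - fst x) + RtoC (b - a))%C
    by (rewrite RtoC_minus; ring).
  pose proof (Cmod_triangle (fst y - fst x) (RtoC (b - a))). rewrite Cmod_R in H. lra.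
Qed.

Lemma param_continuous_comp (F G : R -> C2 -> C2) (a : R) (x : C2) :
  param_continuous F a x -> param_continuous G a (F a x) ->
  param_continuous (fun b y => G b (F b y)) a x.
Proof.
  intros HF HG e He. destruct (HG e He) as [d1 [Hd1 K1]]. destruct (HF d1 Hd1) as [d [Hd K]].
  exists (Rmin d d1). split; [apply Rmin_glb_lt; auto|]. intros b y Hb Hy.
  pose proof (Rmin_l d d1). pose proof (Rmin_r d d1).
  apply K1; [lra|]. apply K; lra.
Qed.

Lemma param_continuous_const (F : C2 -> C2) (a : R) (x : C2) : C2continuous F x ->
  param_continuous (fun _ => F) a x.
Proof.
  intros H e He. destruct (H e He) as [d [Hd K]]. exists d. split; auto.
Qed.

Lemma param_continuous_iter (F : R -> C2 -> C2) : (forall a x, param_continuous F a x) ->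
  forall i a x, param_continuous (fun b y => Nat.iter i (F b) y) a x.
Proof.
  intros H i. induction i as [|i IH]; intros a x.
  - intros e He. exists e. split; auto.
  - apply (param_continuous_comp (fun b y => Nat.iter i (F b) y) F a x); auto.
Qed.

Lemma param_continuous_conj (F Fi : C2 -> C2) : (forall x, C2continuous F x) ->
  (forall x, C2continuous Fi x) -> forall a x, param_continuous (fun b y => Fi (Rot b (F y))) a x.
Proof.
  intros HF HFi a x.
  apply (param_continuous_comp (fun b y => Rot b (F y)) (fun _ => Fi));
    [|apply param_continuous_const; auto].
  apply (param_continuous_comp (fun _ => F) Rot); [apply param_continuous_const; auto|].
  apply param_continuous_Rot.
Qed.

(** * Uniformity on the strip *)

Lemma ex_common_radius (N : nat) (P : nat -> R -> Prop) :
  (forall i d d', 0 < d' <= d -> P i d -> P i d') ->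
  (forall i, (i <= N)%nat -> exists d, 0 < d /\ P i d) ->
  exists d, 0 < d /\ forall i, (i <= N)%nat -> P i d.
Proof.
  intros Hmono H. induction N as [|N IH].
  - destruct (H 0%nat (le_n 0)) as [d [Hd Hp]]. exists d. split; auto.
    intros i Hi. replace i with 0%nat by lia. auto.
  - destruct IH as [d1 [Hd1 K1]]; [intros i Hi; apply H; lia|].
    destruct (H (S N) (le_n _)) as [d2 [Hd2 K2]].
    exists (Rmin d1 d2). split; [apply Rmin_glb_lt; auto|]. intros i Hi.
    pose proof (Rmin_l d1 d2). pose proof (Rmin_r d1 d2).
    assert (0 < Rmin d1 d2) by (apply Rmin_glb_lt; auto).
    destruct (Nat.eq_dec i (S N)) as [->|NE].
    + apply (Hmono _ d2); [split; lra|exact K2].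
    + apply (Hmono _ d1); [split; lra|]. apply K1. lia.
Qed.

Lemma iter_close_near (F F' : R -> C2 -> C2) (a0 : R) (tau : nat) (eps : R) : 0 < eps ->
  (forall a x, param_continuous F a x) -> (forall a x, param_continuous F' a x) ->
  (forall x, F' a0 x = F a0 x) ->
  forall t, exists d, 0 < d /\ forall b y, Rabs (b - a0) < d -> dist2 y t < d ->
    forall i, (i <= tau)%nat -> dist2 (Nat.iter i (F' b) y) (Nat.iter i (F b) y) < eps.
Proof.
  intros Heps HF HF' Hagree t.
  destruct (ex_common_radius tau (fun i d => forall b y, Rabs (b - a0) < d -> dist2 y t < d ->
    dist2 (Nat.iter i (F' b) y) (Nat.iter i (F b) y) < eps)) as [d [Hd K]].
  { intros i d d' Hd' Hp b y Hb Hy. apply Hp; lra. }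
  { intros i _.
    destruct (param_continuous_iter F HF i a0 t (eps/2)) as [d1 [Hd1 K1]]; [lra|].
    destruct (param_continuous_iter F' HF' i a0 t (eps/2)) as [d2 [Hd2 K2]]; [lra|].
    exists (Rmin d1 d2). split; [apply Rmin_glb_lt; auto|]. intros b y Hb Hy.
    pose proof (Rmin_l d1 d2). pose proof (Rmin_r d1 d2).
    specialize (K1 b y ltac:(lra) ltac:(lra)). specialize (K2 b y ltac:(lra) ltac:(lra)).
    replace (F' a0) with (F a0) in K2 by (apply functional_extensionality; auto).
    pose proof (dist2_triangle (Nat.iter i (F' b) y) (Nat.iter i (F a0) t) (Nat.iter i (F b) y)).
    rewrite dist2_sym in K1. lra. }
  exists d. split; auto.
Qed.

Definition in_box (r : R) (z : C2) := in_strip r z /\ 0 <= fst (fst z) <= 1 /\ 0 <= fst (snd z) <= 1.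

Definition C2_of_Tn4 (t : Compactness.Tn 4 R) : C2 :=
  match t with (x1, (x2, (x3, (x4, _)))) => ((x1, x2), (x3, x4)) end.
Definition Tn4_of_C2 (z : C2) : Compactness.Tn 4 R :=
  (fst (fst z), (snd (fst z), (fst (snd z), (snd (snd z), tt)))).

(* A Lebesgue-number argument on the compact box, via Coquelicot's [compactness_value]. *)
Lemma box_uniform (r a0 : R) (Q : R -> C2 -> Prop) :
  (forall t, exists d, 0 < d /\ forall b y, Rabs (b - a0) < d -> dist2 y t < d -> Q b y) ->
  exists d, 0 < d /\ forall b y, Rabs (b - a0) < d -> in_box r y -> Q b y.
Proof.
  intros Hloc.
  assert (Hgauge : forall t4, exists d : posreal, forall b y,
    Rabs (b - a0) < 4 * d -> dist2 y (C2_of_Tn4 t4) < 4 * d -> Q b y).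
  { intros t4. destruct (Hloc (C2_of_Tn4 t4)) as [d [Hd K]].
    exists (mkposreal (d / 4) ltac:(lra)). simpl. intros b y Hb Hy. apply K; lra. }
  set (gauge := fun t4 => proj1_sig (constructive_indefinite_description _ (Hgauge t4))).
  assert (Hg : forall t4 b y, Rabs (b - a0) < 4 * gauge t4 ->
    dist2 y (C2_of_Tn4 t4) < 4 * gauge t4 -> Q b y).
  { intros t4. unfold gauge. destruct (constructive_indefinite_description _ _). auto. }
  destruct (compactness_value 4 (0, (- r, (0, (- r, tt)))) (1, (r, (1, (r, tt)))) gauge)
    as [d Hd].
  exists d. split; [apply cond_pos|]. intros b y Hb [[Hy1 Hy2] [Hy3 Hy4]].
  apply Rabs_le_between in Hy1, Hy2.
  apply NNPP. intro HQ. apply (Hd (Tn4_of_C2 y)); [simpl; tauto|].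
  intros [t [_ [Hclose Hdg]]]. apply HQ.
  pose proof (cond_pos (gauge t)). apply (Hg t); [lra|].
  destruct t as [x1 [x2 [x3 [x4 []]]]]. destruct Hclose as (C1 & C2 & C3 & C4 & _).
  unfold dist2. simpl in *. destruct y as [[y1 y2] [y3 y4]]. simpl in *.
  eapply Rle_lt_trans; [apply Rplus_le_compat; apply Cmod_le_Rabs_sum|]. simpl.
  unfold Rminus in *. lra.
Qed.

Lemma strip_to_box (r : R) (z : C2) : in_strip r z ->
  exists m n z0, in_box r z0 /\ z = shift m n z0.
Proof.
  intros Hz. set (m := (up (fst (fst z)) - 1)%Z). set (n := (up (fst (snd z)) - 1)%Z).
  exists m, n, (shift (- m) (- n) z). split.
  - destruct (archimed (fst (fst z))). destruct (archimed (fst (snd z))).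
    unfold in_box, in_strip, shift, m, n in *. simpl. rewrite !opp_IZR, !minus_IZR.
    rewrite !Rplus_0_r. unfold Im in Hz. repeat split; lra.
  - unfold shift. destruct z as [z1 z2]. simpl. rewrite !opp_IZR, !RtoC_opp. f_equal; ring.
Qed.

Lemma Cmod_shift_le_dist2 (m n : Z) (x y : C2) :
  Cmod (fst (shift m n x) - fst (shift m n y)) <= dist2 y x /\
  Cmod (snd (shift m n x) - snd (shift m n y)) <= dist2 y x.
Proof.
  unfold shift. simpl.
  replace (fst x + IZR m - (fst y + IZR m))%C with (fst x - fst y)%C by ring.
  replace (snd x + IZR n - (snd y + IZR n))%C with (snd x - snd y)%C by ring.
  rewrite dist2_sym. split; [apply Cmod_fst_le_dist2|apply Cmod_snd_le_dist2].
Qed.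

Section Lifts.

Variables (T Ti : R2 -> R2) (Tc Tic : C2 -> C2).
Hypothesis HT : lift_homotopic_id T.
Hypothesis HTi : lift_homotopic_id Ti.
Hypothesis HTc : extends T Tc.
Hypothesis HTic : extends Ti Tic.
Hypothesis HTent : entire_map Tc.
Hypothesis HTient : entire_map Tic.

Lemma Gmap_shift (a : R) (m n : Z) (x : C2) :
  Gmap Tc Tic a (shift m n x) = shift m n (Gmap Tc Tic a x).
Proof. unfold Gmap. rewrite (entire_lift_shift Tc T), Rot_shift, (entire_lift_shift Tic Ti); auto. Qed.

Lemma Gmap'_shift (q : Z) (c a : R) (m n : Z) (x : C2) :
  Gmap' Tc Tic q c a (shift m n x) = shift m n (Gmap' Tc Tic q c a x).
Proof.
  unfold Gmap'.
  rewrite (entire_lift_shift Tc T), Phi_shift, Rot_shift, Phi_inv_shift, (entire_lift_shift Tic Ti);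
    auto.
Qed.

Lemma param_continuous_Gmap (a : R) (x : C2) : param_continuous (Gmap Tc Tic) a x.
Proof. apply param_continuous_conj; intros; apply C2continuous_entire; auto. Qed.

Lemma param_continuous_Gmap' (q : Z) (c a : R) (x : C2) : param_continuous (Gmap' Tc Tic q c) a x.
Proof.
  apply (param_continuous_conj (fun y => Phi q c (Tc y)) (fun y => Tic (Phi_inv q c y)));
    intros; apply C2continuous_comp;
    auto using C2continuous_entire, C2continuous_Phi, C2continuous_Phi_inv.
Qed.

End Lifts.

Theorem corollary2p1
  (T Ti : R2 -> R2) (Tc Tic : C2 -> C2)
  (HTlift : lift_homotopic_id T)
  (HTiT : forall u : R2, Ti (T u) = u) (HTTi : forall u : R2, T (Ti u) = u)
  (HTc : extends T Tc) (HTic : extends Ti Tic)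
  (HTent : entire_map Tc) (HTient : entire_map Tic)
  (p q : Z) (Hcop : Z.gcd p q = 1%Z) (Hq : (1 <= q)%Z)
  (Hpq : 0 <= IZR p / IZR q <= 1)
  (c : R) (Hc : 0 <= c) :
  forall (r eps : R) (tau : nat), 0 <= r -> 0 < eps ->
  exists delta : R, 0 < delta /\
    forall alpha : R, Rabs (alpha - IZR p / IZR q) < delta ->
      exists M : R, M < eps /\
        forall (i : nat) (z : C2), (i <= tau)%nat -> in_strip r z ->
          Cmod (fst (Nat.iter i (Gmap Tc Tic alpha) z) - fst (Nat.iter i (Gmap' Tc Tic q c alpha) z))%C <= M /\
          Cmod (snd (Nat.iter i (Gmap Tc Tic alpha) z) - snd (Nat.iter i (Gmap' Tc Tic q c alpha) z))%C <= M.
Proof.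
  intros r eps tau Hr Heps.
  pose proof (lift_homotopic_id_inv T Ti HTlift HTiT HTTi) as HTilift.
  assert (Hagree : forall x, Gmap' Tc Tic q c (IZR p / IZR q) x = Gmap Tc Tic (IZR p / IZR q) x)
    by (intros; unfold Gmap', Gmap; rewrite Phi_inv_Rot_Phi_rational; auto; apply not_0_IZR; lia).
  destruct (box_uniform r (IZR p / IZR q) _
    (iter_close_near _ _ _ tau (eps / 2) ltac:(lra) (param_continuous_Gmap Tc Tic HTent HTient)
      (param_continuous_Gmap' Tc Tic HTent HTient q c) Hagree)) as [d [Hd Hbox]].
  exists d. split; auto. intros alpha Ha. exists (eps / 2). split; [lra|].
  intros i z Hi Hz. destruct (strip_to_box r z Hz) as (m & n & z0 & Hz0 & ->).
  rewrite (iter_shift _ m n (Gmap_shift T Ti Tc Tic HTlift HTilift HTc HTic HTent HTient alpha m n)),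
    (iter_shift _ m n (Gmap'_shift T Ti Tc Tic HTlift HTilift HTc HTic HTent HTient q c alpha m n)).
  specialize (Hbox alpha z0 Ha Hz0 i Hi).
  destruct (Cmod_shift_le_dist2 m n (Nat.iter i (Gmap Tc Tic alpha) z0)
    (Nat.iter i (Gmap' Tc Tic q c alpha) z0)). split; lra.
Qed.
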